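(* Let $A\in M_2(\mathbb{Z})$ be an expanding matrix with $|\det(A)|=3$, let $k\in\mathbb{Z}\setminus\{0\}$, and let $v\in\mathbb{R}^2$ be such that $\{v,Av\}$ is linearly independent. Let $\mathcal{D}=\{0,v,kAv\}$. Then the self-affine set $T(A,\mathcal{D})$ is connected if and only if $k=\pm1$.
   Context: A real square matrix is expanding if all its eigenvalues have modulus strictly larger than $1$. For an expanding matrix $A\in M_n(\mathbb{Z})$ and a finite set $\mathcal{D}\subset\mathbb{R}^n$ with $|\mathcal D|=|\det A|$, the self-affine set $T(A,\mathcal{D})$ is the unique nonempty compact set $T$ with $AT=T+\mathcal{D}$; equivalently $T=\{\sum_{i=1}^\infty A^{-i}d_{j_i}: d_{j_i}\in\mathcal{D}\}$. *)

From Stdlib Require Import Reals Lra ZArith List.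
Open Scope R_scope.

Definition pt : Type := (R * R)%type.

Definition padd (p q : pt) : pt := (fst p + fst q, snd p + snd q).
Definition pscale (r : R) (p : pt) : pt := (r * fst p, r * snd p).
Definition pzero : pt := (0, 0).

Record mat2Z := Mat2Z { m11 : Z; m12 : Z; m21 : Z; m22 : Z }.

Definition detZ (A : mat2Z) : Z := (m11 A * m22 A - m12 A * m21 A)%Z.

Definition mapply (A : mat2Z) (p : pt) : pt :=
  (IZR (m11 A) * fst p + IZR (m12 A) * snd p,
   IZR (m21 A) * fst p + IZR (m22 A) * snd p).

(* Action of the real inverse matrix A^{-1} on R^2 (meaningful when det A <> 0). *)
Definition minv_apply (A : mat2Z) (p : pt) : pt :=
  let dt := IZR (detZ A) in
  ((IZR (m22 A) * fst p - IZR (m12 A) * snd p) / dt,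
   (- IZR (m21 A) * fst p + IZR (m11 A) * snd p) / dt).

Fixpoint minv_pow (A : mat2Z) (n : nat) (p : pt) : pt :=
  match n with
  | O => p
  | S n' => minv_apply A (minv_pow A n' p)
  end.

(* Complex numbers as pairs (re, im); complex multiplication. *)
Definition cmul (z w : R * R) : R * R :=
  (fst z * fst w - snd z * snd w, fst z * snd w + snd z * fst w).

(* lam is a (complex) eigenvalue of A: there is a nonzero w in C^2 with A w = lam w. *)
Definition is_eigenvalue (A : mat2Z) (lam : R * R) : Prop :=
  exists w1 w2 : R * R,
    (w1 <> (0, 0) \/ w2 <> (0, 0)) /\
    padd (pscale (IZR (m11 A)) w1) (pscale (IZR (m12 A)) w2) = cmul lam w1 /\
    padd (pscale (IZR (m21 A)) w1) (pscale (IZR (m22 A)) w2) = cmul lam w2.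

Definition expanding (A : mat2Z) : Prop :=
  forall lam : R * R, is_eigenvalue A lam ->
    1 < sqrt (fst lam * fst lam + snd lam * snd lam).

(* Partial sums  sum_{i=1}^{n} A^{-i} d_i,  with the digit sequence indexed d 0, d 1, ...
   (d (i-1) plays the role of d_{j_i}). *)
Fixpoint partial_sum (A : mat2Z) (d : nat -> pt) (n : nat) : pt :=
  match n with
  | O => pzero
  | S n' => padd (partial_sum A d n') (minv_pow A n (d n'))
  end.

Definition self_affine_set (A : mat2Z) (D : list pt) (x : pt) : Prop :=
  exists d : nat -> pt,
    (forall i, In (d i) D) /\
    Un_cv (fun n => fst (partial_sum A d n)) (fst x) /\
    Un_cv (fun n => snd (partial_sum A d n)) (snd x).

Definition dist2 (p q : pt) : R :=
  sqrt ((fst p - fst q) * (fst p - fst q) + (snd p - snd q) * (snd p - snd q)).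

Definition open2 (U : pt -> Prop) : Prop :=
  forall p, U p -> exists eps, 0 < eps /\ forall q, dist2 p q < eps -> U q.

Definition connected2 (S : pt -> Prop) : Prop :=
  ~ exists U V : pt -> Prop,
      open2 U /\ open2 V /\
      (forall p, S p -> U p \/ V p) /\
      (exists p, S p /\ U p) /\
      (exists p, S p /\ V p) /\
      (forall p, S p -> U p -> V p -> False).

Definition lin_indep2 (u w : pt) : Prop :=
  forall a b : R, padd (pscale a u) (pscale b w) = pzero -> a = 0 /\ b = 0.

(* In the basis (v, Av), A^{-1} becomes the companion
      matrix M = Mpq (-trace A) (det A) and the digits become 0, e1, k e2, so
      T(A, D) is a linear image of the attractor T(M, D_k); linear maps
      preserve connectedness (self_affine_companion).
   2. Classification.  An expanding integer matrix with |det| = 3 has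
      det = 3, |trace| <= 3 or det = -3, |trace| <= 1: otherwise its
      characteristic polynomial has a real root in [-1, 1]
      (companion_classification).  This leaves ten matrices M.
   3. Each of them satisfies |M x| <= 2|x| and |M^4 x| <= |x|/2 in the sup
      norm, which gives the convergence estimates of section Contraction.
   4. For k = +-1, T is connected by a star-shaped Hata criterion
      (attractor_connected): one first-level piece meets all the others.
      Each intersection is certified by a finite closed "neighbour walk" on
      Z^2 (section Walk).
   5. For |k| >= 2, a linear functional separates the piece with first digit
      k e2 from the two others (sep_not_connected); all bounds are affine in
      |k| - 2, so one rational check covers every such k.
   6. The finitely many certificates of steps 3-5 are checked by computation
      in exact rational arithmetic (certificates_ok). *)

From Stdlib Require Import Reals Lra Lia ZArith List QArith Qreals Classical ClassicalEpsilon.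
Import ListNotations.
Open Scope R_scope.

(* Real 2x2 matrices [[ra rb];[rc rd]] acting on points of R^2.  The
   change to companion coordinates produces non-integral entries, so the
   analysis is carried out for real matrices. *)
Record rmat := RM { ra : R; rb : R; rc : R; rd : R }.

Definition mv (M : rmat) (x : pt) : pt :=
  (ra M * fst x + rb M * snd x, rc M * fst x + rd M * snd x).

Fixpoint mpow (M : rmat) (n : nat) (x : pt) : pt :=
  match n with O => x | S n' => mv M (mpow M n' x) end.

Fixpoint psum (M : rmat) (d : nat -> pt) (n : nat) : pt :=
  match n with O => pzero | S n' => padd (psum M d n') (mpow M n (d n')) end.

Definition psub (x y : pt) : pt := (fst x - fst y, snd x - snd y).

(* The sup norm, for which matrix norms are row sums of absolute values. *)
Definition nrm (x : pt) : R := Rmax (Rabs (fst x)) (Rabs (snd x)).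

Fixpoint rsum (f : nat -> R) (n : nat) : R :=
  match n with O => 0 | S n' => rsum f n' + f n' end.

Lemma pt_eq (x y : pt) : fst x = fst y -> snd x = snd y -> x = y.
Proof. destruct x, y; simpl; intros; subst; reflexivity. Qed.

Lemma psum_S M d n : psum M d (S n) = padd (psum M d n) (mpow M (S n) (d n)).
Proof. reflexivity. Qed.

Lemma psum_ext M w w' n :
  (forall i, (i < n)%nat -> w i = w' i) -> psum M w n = psum M w' n.
Proof. induction n; intros H; simpl; auto. rewrite IHn by auto. rewrite H; auto. Qed.

Lemma mv_padd M x y : mv M (padd x y) = padd (mv M x) (mv M y).
Proof. apply pt_eq; simpl; ring. Qed.
Lemma mv_psub M x y : mv M (psub x y) = psub (mv M x) (mv M y).
Proof. apply pt_eq; simpl; ring. Qed.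
Lemma mv_pscale M r x : mv M (pscale r x) = pscale r (mv M x).
Proof. apply pt_eq; simpl; ring. Qed.

Lemma mpow_padd M n x y : mpow M n (padd x y) = padd (mpow M n x) (mpow M n y).
Proof. induction n; simpl; [reflexivity | rewrite IHn, mv_padd; reflexivity]. Qed.
Lemma mpow_psub M n x y : mpow M n (psub x y) = psub (mpow M n x) (mpow M n y).
Proof. induction n; simpl; [reflexivity | rewrite IHn, mv_psub; reflexivity]. Qed.
Lemma mpow_pscale M n r x : mpow M n (pscale r x) = pscale r (mpow M n x).
Proof. induction n; simpl; [reflexivity | rewrite IHn, mv_pscale; reflexivity]. Qed.
Lemma mpow_zero M n : mpow M n pzero = pzero.
Proof. induction n; simpl; auto. rewrite IHn. apply pt_eq; simpl; ring. Qed.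
Lemma mpow_plus M n m x : mpow M (n + m) x = mpow M n (mpow M m x).
Proof. induction n; simpl; [reflexivity | rewrite IHn; reflexivity]. Qed.
Lemma mpow_S' M n x : mpow M (S n) x = mpow M n (mv M x).
Proof. replace (S n) with (n + 1)%nat by lia. apply mpow_plus. Qed.

Lemma nrm_nonneg x : 0 <= nrm x.
Proof. unfold nrm. apply Rle_trans with (Rabs (fst x)); [apply Rabs_pos | apply Rmax_l]. Qed.
Lemma nrm_fst x : Rabs (fst x) <= nrm x.
Proof. apply Rmax_l. Qed.
Lemma nrm_snd x : Rabs (snd x) <= nrm x.
Proof. apply Rmax_r. Qed.
Lemma nrm_le x c : Rabs (fst x) <= c -> Rabs (snd x) <= c -> nrm x <= c.
Proof. intros; apply Rmax_lub; auto. Qed.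
Lemma nrm_pzero : nrm pzero = 0.
Proof. unfold nrm; simpl. rewrite Rabs_R0. apply Rmax_left; lra. Qed.

Lemma nrm_padd x y : nrm (padd x y) <= nrm x + nrm y.
Proof.
  apply nrm_le; simpl; eapply Rle_trans; try apply Rabs_triang;
    apply Rplus_le_compat; auto using nrm_fst, nrm_snd.
Qed.
Lemma psub_tri x y z : nrm (psub x z) <= nrm (psub x y) + nrm (psub y z).
Proof.
  replace (psub x z) with (padd (psub x y) (psub y z)) by (apply pt_eq; simpl; ring).
  apply nrm_padd.
Qed.
Lemma psub_sym x y : nrm (psub x y) = nrm (psub y x).
Proof. unfold nrm, psub; simpl. rewrite (Rabs_minus_sym (fst x)), (Rabs_minus_sym (snd x)). reflexivity. Qed.

Definition row_norm (M : rmat) : R :=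
  Rmax (Rabs (ra M) + Rabs (rb M)) (Rabs (rc M) + Rabs (rd M)).

Lemma row_norm_nonneg M : 0 <= row_norm M.
Proof.
  unfold row_norm. pose proof (Rabs_pos (ra M)); pose proof (Rabs_pos (rb M)).
  pose proof (Rmax_l (Rabs (ra M) + Rabs (rb M)) (Rabs (rc M) + Rabs (rd M))). lra.
Qed.

Lemma mv_bound M x : nrm (mv M x) <= row_norm M * nrm x.
Proof.
  pose proof (nrm_fst x); pose proof (nrm_snd x); pose proof (nrm_nonneg x).
  pose proof (Rmax_l (Rabs (ra M) + Rabs (rb M)) (Rabs (rc M) + Rabs (rd M))).
  pose proof (Rmax_r (Rabs (ra M) + Rabs (rb M)) (Rabs (rc M) + Rabs (rd M))).
  unfold row_norm.
  apply nrm_le; simpl; eapply Rle_trans; try apply Rabs_triang; rewrite !Rabs_mult.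
  - apply Rle_trans with ((Rabs (ra M) + Rabs (rb M)) * nrm x); [|apply Rmult_le_compat_r; auto].
    rewrite Rmult_plus_distr_r. apply Rplus_le_compat; apply Rmult_le_compat_l; auto using Rabs_pos.
  - apply Rle_trans with ((Rabs (rc M) + Rabs (rd M)) * nrm x); [|apply Rmult_le_compat_r; auto].
    rewrite Rmult_plus_distr_r. apply Rplus_le_compat; apply Rmult_le_compat_l; auto using Rabs_pos.
Qed.

Lemma dist2_fst p q : Rabs (fst p - fst q) <= dist2 p q.
Proof.
  unfold dist2. rewrite <- sqrt_Rsqr_abs. apply sqrt_le_1_alt. unfold Rsqr.
  pose proof (Rle_0_sqr (snd p - snd q)). unfold Rsqr in H. lra.
Qed.
Lemma dist2_snd p q : Rabs (snd p - snd q) <= dist2 p q.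
Proof.
  unfold dist2. rewrite <- sqrt_Rsqr_abs. apply sqrt_le_1_alt. unfold Rsqr.
  pose proof (Rle_0_sqr (fst p - fst q)). unfold Rsqr in H. lra.
Qed.
Lemma nrm_le_dist2 p q : nrm (psub p q) <= dist2 p q.
Proof. apply nrm_le; [apply dist2_fst | apply dist2_snd]. Qed.
Lemma dist2_le p q : dist2 p q <= 2 * nrm (psub p q).
Proof.
  unfold dist2. set (a := fst p - fst q). set (b := snd p - snd q).
  assert (Ha : Rabs a <= nrm (psub p q)) by apply (nrm_fst (psub p q)).
  assert (Hb : Rabs b <= nrm (psub p q)) by apply (nrm_snd (psub p q)).
  pose proof (Rabs_pos a); pose proof (Rabs_pos b).
  apply Rle_trans with (Rabs a + Rabs b); [|lra].
  rewrite <- (sqrt_square (Rabs a + Rabs b)) by lra.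
  apply sqrt_le_1_alt.
  assert (a * a = Rabs a * Rabs a) by (rewrite <- Rabs_mult, Rabs_pos_eq; nra).
  assert (b * b = Rabs b * Rabs b) by (rewrite <- Rabs_mult, Rabs_pos_eq; nra).
  nra.
Qed.
Definition pcv (s : nat -> pt) (x : pt) : Prop :=
  Un_cv (fun n => fst (s n)) (fst x) /\ Un_cv (fun n => snd (s n)) (snd x).

Lemma Rabs_le_between a b : Rabs a <= b -> - b <= a <= b.
Proof. unfold Rabs; destruct (Rcase_abs a); lra. Qed.

Lemma cv_const c : Un_cv (fun _ : nat => c) c.
Proof. intros e He. exists O. intros. unfold Rdist. rewrite Rminus_diag, Rabs_R0. auto. Qed.

Lemma pcv_unique s x y : pcv s x -> pcv s y -> x = y.
Proof. intros [H1x H2x] [H1y H2y]. apply pt_eq; eapply UL_sequence; eauto. Qed.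

Lemma pcv_ext s s' x : (forall n, s n = s' n) -> pcv s x -> pcv s' x.
Proof.
  intros E [H1 H2]. split; (eapply Un_cv_ext; [|eassumption]); intro n; simpl; rewrite E; auto.
Qed.

Lemma pcv_const x : pcv (fun _ => x) x.
Proof. split; apply cv_const. Qed.

Lemma pcv_padd s t x y : pcv s x -> pcv t y -> pcv (fun n => padd (s n) (t n)) (padd x y).
Proof. intros [H1 H2] [G1 G2]. split; simpl; apply CV_plus; auto. Qed.

Lemma pcv_psub s t x y : pcv s x -> pcv t y -> pcv (fun n => psub (s n) (t n)) (psub x y).
Proof. intros [H1 H2] [G1 G2]. split; simpl; apply CV_minus; auto. Qed.

Lemma pcv_mv G s x : pcv s x -> pcv (fun n => mv G (s n)) (mv G x).
Proof. intros [H1 H2]. split; simpl; apply CV_plus; apply CV_mult; auto; apply cv_const. Qed.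

Lemma pcv_mpow G m s x : pcv s x -> pcv (fun n => mpow G m (s n)) (mpow G m x).
Proof. intros H. induction m; simpl; auto. apply pcv_mv; auto. Qed.

Lemma pcv_tail s x k : pcv s x -> pcv (fun n => s (n + k)%nat) x.
Proof. intros [H1 H2]. split; apply (CV_shift' (fun n => _ (s n))); auto. Qed.

Lemma cv_le_ev (u : nat -> R) l c N : Un_cv u l -> (forall n, (N <= n)%nat -> u n <= c) -> l <= c.
Proof.
  intros Hu Hb. apply (Rle_cv_lim (Un := fun n => u (n + N)%nat) (Vn := fun _ => c)).
  - intro n; apply Hb; lia.
  - apply CV_shift'; auto.
  - apply cv_const.
Qed.
Lemma cv_ge_ev (u : nat -> R) l c N : Un_cv u l -> (forall n, (N <= n)%nat -> c <= u n) -> c <= l.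
Proof.
  intros Hu Hb. apply (Rle_cv_lim (Un := fun _ => c) (Vn := fun n => u (n + N)%nat)).
  - intro n; apply Hb; lia.
  - apply cv_const.
  - apply CV_shift'; auto.
Qed.

Lemma pcv_nrm_le s x c : pcv s x -> (forall n, nrm (s n) <= c) -> nrm x <= c.
Proof.
  intros [H1 H2] Hb.
  assert (Hc : forall (u : nat -> R) l, Un_cv u l -> (forall n, Rabs (u n) <= c) -> Rabs l <= c).
  { intros u l Hu Hub. apply Rabs_le. split.
    - apply (cv_ge_ev u l (- c) 0); auto. intros n _. specialize (Hub n). apply Rabs_le_between in Hub; lra.
    - apply (cv_le_ev u l c 0); auto. intros n _. specialize (Hub n). apply Rabs_le_between in Hub; lra. }
  apply nrm_le; [apply (Hc (fun n => fst (s n))) | apply (Hc (fun n => snd (s n)))]; auto;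
    intro n; [apply Rle_trans with (nrm (s n)); auto using nrm_fst
             | apply Rle_trans with (nrm (s n)); auto using nrm_snd].
Qed.

Lemma pcv_geom_zero s C r : 0 <= r < 1 -> (forall n, nrm (s n) <= C * r ^ n) -> pcv s pzero.
Proof.
  intros Hr Hs.
  assert (Hg : Un_cv (fun n => C * r ^ n) 0).
  { replace 0 with (C * 0) by ring. apply CV_mult; [apply cv_const|].
    intros e He. destruct (pow_lt_1_zero r) with e as [N HN]; auto.
    { rewrite Rabs_pos_eq; lra. }
    exists N. intros n Hn. unfold Rdist. rewrite Rminus_0_r. auto. }
  assert (Hc : forall (u : nat -> R), (forall n, Rabs (u n) <= C * r ^ n) -> Un_cv u 0).
  { intros u Hu e He. destruct (Hg e He) as [N HN]. exists N. intros n Hn.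
    specialize (HN n Hn). unfold Rdist in *. rewrite Rminus_0_r in *.
    eapply Rle_lt_trans; [apply Hu|]. eapply Rle_lt_trans; [apply Rle_abs | exact HN]. }
  split; apply Hc; intro n; eapply Rle_trans; [apply nrm_fst | apply Hs | apply nrm_snd | apply Hs].
Qed.
Lemma rsum_ext f g n : (forall i, (i < n)%nat -> f i = g i) -> rsum f n = rsum g n.
Proof. induction n; simpl; intros; auto. rewrite IHn by auto. rewrite H; auto. Qed.
Lemma rsum_le f g n : (forall i, (i < n)%nat -> f i <= g i) -> rsum f n <= rsum g n.
Proof. induction n; simpl; intros; [lra|]. apply Rplus_le_compat; auto. Qed.
Lemma rsum_plus f n m : rsum f (n + m) = rsum f n + rsum (fun i => f (n + i)%nat) m.
Proof. induction m; simpl. rewrite Nat.add_0_r; ring. rewrite Nat.add_succ_r; simpl. rewrite IHm; ring. Qed.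
Lemma rsum_nonneg f n : (forall i, 0 <= f i) -> 0 <= rsum f n.
Proof. induction n; simpl; intros; [lra|]. pose proof (H n); pose proof (IHn H); lra. Qed.
Lemma rsum_lin (g1 g2 : nat -> R) a b n :
  rsum (fun j => a * g1 j + b * g2 j) n = a * rsum g1 n + b * rsum g2 n.
Proof. induction n; simpl; [ring | rewrite IHn; ring]. Qed.
Lemma rsum_abs g n : Rabs (rsum g n) <= rsum (fun j => Rabs (g j)) n.
Proof.
  induction n; simpl. rewrite Rabs_R0; lra.
  eapply Rle_trans; [apply Rabs_triang|]. lra.
Qed.

Definition conv (M : rmat) (d : nat -> pt) (x : pt) : Prop := pcv (psum M d) x.

Lemma conv_ext M w w' x : (forall i, w i = w' i) -> conv M w x -> conv M w' x.
Proof. intros H. apply pcv_ext. intro n. apply psum_ext; auto. Qed.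

Lemma conv_unique M d x y : conv M d x -> conv M d y -> x = y.
Proof. apply pcv_unique. Qed.

Definition shiftw (m : nat) (d : nat -> pt) : nat -> pt := fun i => d (m + i)%nat.

Lemma psum_shift M d m n :
  psum M d (m + n) = padd (psum M d m) (mpow M m (psum M (shiftw m d) n)).
Proof.
  induction n.
  - rewrite Nat.add_0_r. simpl. rewrite mpow_zero. apply pt_eq; simpl; ring.
  - rewrite Nat.add_succ_r, !psum_S, IHn, mpow_padd.
    unfold shiftw at 2. rewrite <- mpow_plus, <- Nat.add_succ_r.
    unfold shiftw. apply pt_eq; simpl; ring.
Qed.

Lemma conv_shift M d m x y :
  conv M d x -> conv M (shiftw m d) y -> x = padd (psum M d m) (mpow M m y).
Proof.
  intros Hx Hy. apply (pcv_unique (fun n => psum M d (n + m))).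
  - apply pcv_tail; auto.
  - apply (pcv_ext (fun n => padd (psum M d m) (mpow M m (psum M (shiftw m d) n)))).
    + intro n. rewrite Nat.add_comm, psum_shift. reflexivity.
    + apply pcv_padd; [apply pcv_const | apply pcv_mpow; auto].
Qed.

(* The decay rate used throughout: 17/20 > (1/2)^(1/4). *)
Definition rho : R := 17/20.

Lemma rho_pos : 0 < rho. Proof. unfold rho; lra. Qed.
Lemma rho_lt1 : rho < 1. Proof. unfold rho; lra. Qed.
Lemma pow_rho_pos n : 0 < rho ^ n. Proof. apply pow_lt, rho_pos. Qed.

Lemma rho_small e : 0 < e -> exists N, rho ^ N < e.
Proof.
  intros He. destruct (pow_lt_1_zero rho) with e as [N HN]; auto.
  { rewrite Rabs_pos_eq; [apply rho_lt1 | left; apply rho_pos]. }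
  exists N. specialize (HN N (le_n _)). rewrite Rabs_pos_eq in HN; auto. left; apply pow_rho_pos.
Qed.

Section Contraction.
Variable M : rmat.
Hypothesis Hstep : forall x, nrm (mv M x) <= 2 * nrm x.
Hypothesis Hcontr : forall x, nrm (mpow M 4 x) <= /2 * nrm x.

Lemma pow_bound n x : nrm (mpow M n x) <= 2 ^ n * nrm x.
Proof. pose proof (nrm_nonneg x). induction n; simpl. lra. eapply Rle_trans; [apply Hstep|]. nra. Qed.

Lemma decay n x : nrm (mpow M n x) <= 14 * rho ^ n * nrm x.
Proof.
  assert (K : forall j r y, (r < 4)%nat -> nrm (mpow M (4 * j + r) y) <= 14 * rho ^ (4 * j + r) * nrm y).
  { induction j; intros r y Hr; pose proof (nrm_nonneg y).
    - simpl. eapply Rle_trans; [apply pow_bound|]. apply Rmult_le_compat_r; auto.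
      destruct r as [|[|[|[|]]]]; unfold rho; simpl; lra || lia.
    - replace (4 * S j + r)%nat with ((4 * j + r) + 4)%nat by lia.
      rewrite mpow_plus, pow_add. eapply Rle_trans; [apply IHj; auto|].
      pose proof (Hcontr y). pose proof (pow_rho_pos (4 * j + r)).
      assert (rho ^ 4 >= /2) by (unfold rho; simpl; lra).
      assert (14 * rho ^ (4 * j + r) * nrm (mpow M 4 y) <= 14 * rho ^ (4 * j + r) * (/2 * nrm y))
        by (apply Rmult_le_compat_l; lra).
      assert (0 <= (rho ^ 4 - /2) * (rho ^ (4 * j + r) * nrm y)) by (apply Rmult_le_pos; nra).
      nra. }
  replace n with (4 * (n / 4) + n mod 4)%nat by (pose proof (Nat.div_mod_eq n 4); lia).
  apply K. apply Nat.mod_upper_bound; lia.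
Qed.

Lemma orbit_sum_bound n z : rsum (fun j => nrm (mpow M j z)) n <= 30 * nrm z.
Proof.
  assert (K : forall j y, rsum (fun j => nrm (mpow M j y)) (4 * j) <= 30 * nrm y).
  { induction j; intros y.
    - simpl. pose proof (nrm_nonneg y); lra.
    - replace (4 * S j)%nat with (4 + 4 * j)%nat by lia. rewrite rsum_plus.
      rewrite (rsum_ext (fun i => nrm (mpow M (4 + i) y)) (fun i => nrm (mpow M i (mpow M 4 y)))).
      2:{ intros i _. rewrite Nat.add_comm, mpow_plus. reflexivity. }
      pose proof (IHj (mpow M 4 y)). pose proof (Hcontr y).
      pose proof (pow_bound 1 y). pose proof (pow_bound 2 y). pose proof (pow_bound 3 y).
      simpl rsum in *. simpl in *. lra. }
  apply Rle_trans with (rsum (fun j => nrm (mpow M j z)) (4 * S n)); [|apply K].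
  replace (4 * S n)%nat with (n + (4 * S n - n))%nat by lia. rewrite rsum_plus.
  pose proof (rsum_nonneg (fun i => nrm (mpow M (n + i) z)) (4 * S n - n) (fun i => nrm_nonneg _)). lra.
Qed.

Section Digits.
Variable d : nat -> pt.
Variable B : R.
Hypothesis HB : forall i, nrm (d i) <= B.

Lemma B_nonneg : 0 <= B.
Proof. eapply Rle_trans; [apply nrm_nonneg | apply (HB 0%nat)]. Qed.

Lemma psum_cauchy n m : nrm (psub (psum M d (n + m)) (psum M d n)) <= 100 * B * rho ^ n.
Proof.
  pose proof B_nonneg as HB0.
  assert (G : nrm (psub (psum M d (n + m)) (psum M d n)) <= 14 * B * rho ^ S n * (20/3) * (1 - rho ^ m)).
  { induction m.
    - rewrite Nat.add_0_r. simpl pow.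
      replace (psub (psum M d n) (psum M d n)) with pzero by (apply pt_eq; simpl; ring).
      rewrite nrm_pzero. lra.
    - rewrite Nat.add_succ_r, psum_S.
      replace (psub (padd (psum M d (n + m)) (mpow M (S (n + m)) (d (n + m)%nat))) (psum M d n))
        with (padd (psub (psum M d (n + m)) (psum M d n)) (mpow M (S (n + m)) (d (n + m)%nat)))
        by (apply pt_eq; simpl; ring).
      eapply Rle_trans; [apply nrm_padd|].
      pose proof (decay (S (n + m)) (d (n + m)%nat)). pose proof (HB (n + m)%nat).
      pose proof (pow_rho_pos (S (n + m))).
      assert (14 * rho ^ S (n + m) * nrm (d (n + m)%nat) <= 14 * rho ^ S (n + m) * B)
        by (apply Rmult_le_compat_l; lra).
      replace (rho ^ S (n + m)) with (rho ^ S n * rho ^ m) in * by (rewrite <- pow_add; f_equal; lia).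
      change (rho ^ S m) with (rho * rho ^ m).
      pose proof (pow_rho_pos (S n)). pose proof (pow_rho_pos m).
      unfold rho in *. nra. }
  eapply Rle_trans; [exact G|].
  pose proof (pow_rho_pos n). pose proof (pow_rho_pos m).
  assert (0 <= B * rho ^ n * rho ^ m) by (apply Rmult_le_pos; [apply Rmult_le_pos|]; lra).
  simpl. unfold rho in *. nra.
Qed.

Lemma conv_exists : exists x, conv M d x.
Proof.
  pose proof B_nonneg as HB0.
  assert (Cc : forall (pr : pt -> R), (forall y, Rabs (pr y) <= nrm y) ->
              (forall x y, pr (psub x y) = pr x - pr y) ->
              Cauchy_crit (fun n => pr (psum M d n))).
  { intros pr Hpr Hlin e He.
    destruct (rho_small (e / (2 * (100 * B + 1)))) as [N HN]; [apply Rdiv_lt_0_compat; lra|].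
    exists N. intros n m Hn Hm. unfold Rdist.
    assert (G : forall k, (k >= N)%nat -> Rabs (pr (psum M d k) - pr (psum M d N)) < e / 2).
    { intros k Hk. replace k with (N + (k - N))%nat by lia. rewrite <- Hlin.
      eapply Rle_lt_trans; [apply Hpr|]. eapply Rle_lt_trans; [apply psum_cauchy|].
      pose proof (pow_rho_pos N).
      apply Rle_lt_trans with ((100 * B + 1) * rho ^ N); [nra|].
      apply Rlt_le_trans with ((100 * B + 1) * (e / (2 * (100 * B + 1)))).
      - apply Rmult_lt_compat_l; lra.
      - right; field; lra. }
    pose proof (G n Hn); pose proof (G m Hm).
    replace (pr (psum M d n) - pr (psum M d m)) with
      ((pr (psum M d n) - pr (psum M d N)) - (pr (psum M d m) - pr (psum M d N))) by ring.
    eapply Rle_lt_trans; [apply Rabs_triang|]. rewrite Rabs_Ropp. lra. }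
  destruct (R_complete _ (Cc fst nrm_fst (fun x y => eq_refl))) as [a Ha].
  destruct (R_complete _ (Cc snd nrm_snd (fun x y => eq_refl))) as [b Hb].
  exists (a, b). split; assumption.
Qed.

Lemma conv_tail_bound x n : conv M d x -> nrm (psub x (psum M d n)) <= 100 * B * rho ^ n.
Proof.
  intros Hx.
  apply (pcv_nrm_le (fun m => psub (psum M d (m + n)) (psum M d n))).
  - apply pcv_psub; [apply pcv_tail; auto | apply pcv_const].
  - intro m. rewrite Nat.add_comm. apply psum_cauchy.
Qed.
End Digits.
End Contraction.
Definition valid (D : list pt) (w : nat -> pt) : Prop := forall i, In (w i) D.

Definition attractor (M : rmat) (D : list pt) (x : pt) : Prop :=
  exists w, valid D w /\ conv M w x.

Definition agree (w w' : nat -> pt) (m : nat) : Prop := forall i, (i < m)%nat -> w i = w' i.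

Definition wcons (a : pt) (s : nat -> pt) : nat -> pt :=
  fun i => match i with O => a | S j => s j end.

Definition spl (w : nat -> pt) (m : nat) (a : pt) (s : nat -> pt) : nat -> pt :=
  fun i => if (i <? m)%nat then w i else wcons a s (i - m).

Definition upd (w : nat -> pt) (m : nat) (a : pt) : nat -> pt :=
  fun i => if (i =? m)%nat then a else w i.

(* The first-level pieces M(a + T) and M(c + T) of T intersect. *)
Definition pieces_meet (M : rmat) (D : list pt) (a c : pt) : Prop :=
  exists s t x, valid D s /\ valid D t /\ conv M (wcons a s) x /\ conv M (wcons c t) x.

Lemma agree_trans w1 w2 w3 m : agree w1 w2 m -> agree w2 w3 m -> agree w1 w3 m.
Proof. intros A1 A2 i Hi. rewrite A1, A2; auto. Qed.
Lemma agree_le w1 w2 m n : (n <= m)%nat -> agree w1 w2 m -> agree w1 w2 n.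
Proof. intros H A i Hi. apply A; lia. Qed.

Lemma wcons_valid D a s : In a D -> valid D s -> valid D (wcons a s).
Proof. intros Ha Hs [|i]; simpl; auto. Qed.
Lemma spl_valid D w m a s : valid D w -> In a D -> valid D s -> valid D (spl w m a s).
Proof. intros Hw Ha Hs i. unfold spl. destruct (i <? m)%nat; auto. apply wcons_valid; auto. Qed.
Lemma upd_valid D w m a : valid D w -> In a D -> valid D (upd w m a).
Proof. intros Hw Ha i; unfold upd; destruct (i =? m)%nat; auto. Qed.

Lemma spl_agree w m a s : agree w (spl w m a s) m.
Proof. intros i Hi. unfold spl. apply Nat.ltb_lt in Hi. rewrite Hi. auto. Qed.
Lemma spl_at w m a s : spl w m a s m = a.
Proof. unfold spl. rewrite Nat.ltb_irrefl, Nat.sub_diag. reflexivity. Qed.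
Lemma spl_shift w m a s i : shiftw m (spl w m a s) i = wcons a s i.
Proof.
  unfold shiftw, spl. replace (m + i <? m)%nat with false by (symmetry; apply Nat.ltb_ge; lia).
  f_equal; lia.
Qed.

Lemma spl_same M w m a s c t y x1 x2 :
  conv M (wcons a s) y -> conv M (wcons c t) y ->
  conv M (spl w m a s) x1 -> conv M (spl w m c t) x2 -> x1 = x2.
Proof.
  intros Hy1 Hy2 Hx1 Hx2.
  rewrite (conv_shift M _ m x1 y Hx1), (conv_shift M _ m x2 y Hx2).
  - rewrite (psum_ext M (spl w m a s) w m), (psum_ext M (spl w m c t) w m); auto;
      intros i Hi; symmetry; apply spl_agree; auto.
  - eapply conv_ext; [|exact Hy2]. intro i; rewrite spl_shift; auto.
  - eapply conv_ext; [|exact Hy1]. intro i; rewrite spl_shift; auto.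
Qed.

(* Connectivity criterion (a star-shaped version of Hata's criterion): if
   some digit c has M(c + T) meeting M(a + T) for every digit a, then T is
   connected.  The proof is by contradiction: given a separation by open
   sets U, V, the colour "the limit lies in U" of a digit sequence is
   (by compactness) determined by its first N digits, and then by descending
   induction on N by none of them, which contradicts both U and V meeting T. *)
Section Connectivity.
Variable M : rmat.
Hypothesis Hstep : forall x, nrm (mv M x) <= 2 * nrm x.
Hypothesis Hcontr : forall x, nrm (mpow M 4 x) <= /2 * nrm x.
Variable D : list pt.
Variable B : R.
Hypothesis HB : forall d, In d D -> nrm d <= B.
Hypothesis Hstar : exists c, In c D /\ forall a, In a D -> pieces_meet M D a c.

Lemma valid_bound w : valid D w -> forall i, nrm (w i) <= B.
Proof. intros Hw i; apply HB, Hw. Qed.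

Lemma valid_conv w : valid D w -> exists x, conv M w x.
Proof. intros Hw; exact (conv_exists M Hstep Hcontr w B (valid_bound w Hw)). Qed.

Lemma close_agree w w' m x x' : valid D w -> valid D w' -> agree w w' m ->
  conv M w x -> conv M w' x' -> nrm (psub x x') <= 200 * B * rho ^ m.
Proof.
  intros Hw Hw' Ha Hx Hx'.
  pose proof (conv_tail_bound M Hstep Hcontr w B (valid_bound w Hw) x m Hx).
  pose proof (conv_tail_bound M Hstep Hcontr w' B (valid_bound w' Hw') x' m Hx').
  rewrite (psum_ext M w w' m Ha) in H.
  eapply Rle_trans; [apply (psub_tri x (psum M w' m) x')|]. rewrite (psub_sym (psum M w' m)). lra.
Qed.

Section Separation.
Variables U V : pt -> Prop.
Hypothesis HU : open2 U.
Hypothesis HV : open2 V.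
Hypothesis Hcov : forall p, attractor M D p -> U p \/ V p.
Hypothesis HpU : exists p, attractor M D p /\ U p.
Hypothesis HpV : exists p, attractor M D p /\ V p.
Hypothesis Hdis : forall p, attractor M D p -> U p -> V p -> False.

Definition col (w : nat -> pt) : Prop := exists x, conv M w x /\ U x.

Lemma col_iff w x : conv M w x -> (col w <-> U x).
Proof.
  intros Hx; split.
  - intros [y [Hy Uy]]. rewrite (conv_unique M w x y Hx Hy). auto.
  - intros Ux; exists x; auto.
Qed.

(* Openness of U and V: the colour is locally constant. *)
Lemma loc_const w : valid D w ->
  exists m, forall w', valid D w' -> agree w w' m -> (col w' <-> col w).
Proof.
  intros Hw. destruct (valid_conv w Hw) as [x Hx].
  assert (Tx : attractor M D x) by (exists w; auto).
  assert (HB0 : 0 <= B) by apply (B_nonneg w B (valid_bound w Hw)).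
  assert (Key : forall W, open2 W -> W x -> exists m, forall w' x', valid D w' -> agree w w' m ->
             conv M w' x' -> W x').
  { intros W HW Wx. destruct (HW x Wx) as [eps [He Hball]].
    destruct (rho_small (eps / (400 * B + 1))) as [m Hm]; [apply Rdiv_lt_0_compat; lra|].
    exists m. intros w' x' Hw' Ha Hx'. apply Hball.
    eapply Rle_lt_trans; [apply dist2_le|].
    pose proof (close_agree w w' m x x' Hw Hw' Ha Hx Hx'). pose proof (pow_rho_pos m).
    apply Rle_lt_trans with ((400 * B + 1) * rho ^ m); [nra|].
    apply Rlt_le_trans with ((400 * B + 1) * (eps / (400 * B + 1))).
    - apply Rmult_lt_compat_l; lra.
    - right; field; lra. }
  destruct (Hcov x Tx) as [Ux | Vx].
  - destruct (Key U HU Ux) as [m Hm]. exists m. intros w' Hw' Ha.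
    destruct (valid_conv w' Hw') as [x' Hx'].
    rewrite (col_iff w' x' Hx'), (col_iff w x Hx). split; intros _; [auto | eapply Hm; eauto].
  - destruct (Key V HV Vx) as [m Hm]. exists m. intros w' Hw' Ha.
    destruct (valid_conv w' Hw') as [x' Hx'].
    assert (Tx' : attractor M D x') by (exists w'; auto).
    rewrite (col_iff w' x' Hx'), (col_iff w x Hx). split; intro HH; exfalso.
    + apply (Hdis x' Tx' HH). eapply Hm; eauto.
    + apply (Hdis x Tx HH Vx).
Qed.

Definition decided (w : nat -> pt) (m N : nat) : Prop :=
  forall w1 w2, valid D w1 -> valid D w2 -> agree w w1 m -> agree w w2 m -> agree w1 w2 N ->
    (col w1 <-> col w2).

Lemma decided_mono w m N N' : (N <= N')%nat -> decided w m N -> decided w m N'.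
Proof. intros Hle G w1 w2 V1 V2 A1 A2 A12. apply G; auto. eapply agree_le; eauto. Qed.

Lemma fin_max (P : pt -> nat -> Prop) (L : list pt) :
  (forall d n n', (n <= n')%nat -> P d n -> P d n') ->
  (forall d, In d L -> exists n, P d n) -> exists N, forall d, In d L -> P d N.
Proof.
  intros Hm. induction L as [|a L IH]; intros H.
  - exists O. intros d [].
  - destruct (H a (or_introl eq_refl)) as [na Ha].
    destruct IH as [N HN]; [intros d Hd; apply H; right; auto|].
    exists (Nat.max na N). intros d [<-|Hd].
    + eapply Hm; [|exact Ha]; lia.
    + eapply Hm; [|apply HN; auto]; lia.
Qed.

(* Pigeonhole: an undecided cylinder has an undecided one-digit extension. *)
Lemma undecided_step w m : valid D w -> (forall N, ~ decided w m N) ->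
  exists a, In a D /\ forall N, ~ decided (upd w m a) (S m) N.
Proof.
  intros Hw Hbad. apply NNPP. intro Hno.
  assert (Hall : forall a, In a D -> exists N, decided (upd w m a) (S m) N).
  { intros a Ha. apply NNPP. intro Hn. apply Hno. exists a. split; auto.
    intros N G. apply Hn. exists N; auto. }
  destruct (fin_max (fun a N => decided (upd w m a) (S m) N) D) as [N HN]; auto.
  { intros d n n' Hle G. eapply decided_mono; eauto. }
  apply (Hbad (Nat.max N (S m))).
  intros w1 w2 V1 V2 A1 A2 A12.
  apply (HN (w1 m) (V1 m)); auto.
  - intros i Hi. unfold upd. destruct (Nat.eqb_spec i m); [subst; auto | apply A1; lia].
  - intros i Hi. unfold upd. destruct (Nat.eqb_spec i m); [subst; apply A12; lia | apply A2; lia].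
  - eapply agree_le; [|exact A12]; lia.
Qed.

(* Compactness (Koenig's lemma): the colour is determined by a bounded prefix. *)
Lemma decided_uniformly :
  exists N, forall w w', valid D w -> valid D w' -> agree w w' N -> (col w <-> col w').
Proof.
  destruct HpU as [p0 [[w0 [Hw0 _]] _]].
  apply NNPP. intro Hno.
  assert (Hroot : forall N, ~ decided w0 O N).
  { intros N G. apply Hno. exists N. intros w w' Hw Hw' A. apply G; auto; intros i Hi; lia. }
  assert (Hch : forall w m, exists a, In a D /\ (valid D w -> (forall N, ~ decided w m N) ->
                                         forall N, ~ decided (upd w m a) (S m) N)).
  { intros w m. destruct (classic (valid D w /\ forall N, ~ decided w m N)) as [[Hv Hb]|Hn].
    - destruct (undecided_step w m Hv Hb) as [a [Ha Hg]]. exists a; auto.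
    - exists (w0 O). split; [apply Hw0|]. intros Hv Hb. exfalso; apply Hn; auto. }
  set (ch := fun w m => proj1_sig (constructive_indefinite_description _ (Hch w m))).
  assert (Hchs : forall w m, In (ch w m) D /\ (valid D w -> (forall N, ~ decided w m N) ->
                                         forall N, ~ decided (upd w m (ch w m)) (S m) N))
    by (intros w m; exact (proj2_sig (constructive_indefinite_description _ (Hch w m)))).
  set (b := fix b (m : nat) : nat -> pt :=
         match m with O => w0 | S m' => upd (b m') m' (ch (b m') m') end).
  assert (bv : forall m, valid D (b m)).
  { induction m; simpl; auto. apply upd_valid; auto. apply Hchs. }
  assert (bb : forall m N, ~ decided (b m) m N).
  { induction m; simpl; auto. apply Hchs; auto. }
  set (beta := fun i => b (S i) i).
  assert (bstab : forall i j, (i < j)%nat -> b j i = b (S i) i).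
  { intros i j Hij. induction j; [lia|].
    destruct (Nat.eq_dec i j); [subst; auto|].
    simpl. unfold upd. destruct (Nat.eqb_spec i j); [lia | apply IHj; lia]. }
  assert (bagree : forall m, agree beta (b m) m).
  { intros m i Hi. unfold beta. symmetry; apply bstab; auto. }
  destruct (loc_const beta (fun i => bv (S i) i)) as [m0 Hm0].
  apply (bb m0 O). intros w1 w2 V1 V2 A1 A2 _.
  rewrite (Hm0 w1 V1), (Hm0 w2 V2); [tauto | |];
    eapply agree_trans; [apply bagree | auto | apply bagree | auto].
Qed.

Lemma col_spl_meet w m a s c t y :
  valid D w -> In a D -> In c D -> valid D s -> valid D t ->
  conv M (wcons a s) y -> conv M (wcons c t) y -> (col (spl w m a s) <-> col (spl w m c t)).
Proof.
  intros Hw Ha Hc Hs Ht Y1 Y2.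
  destruct (valid_conv _ (spl_valid D w m a s Hw Ha Hs)) as [x1 X1].
  destruct (valid_conv _ (spl_valid D w m c t Hw Hc Ht)) as [x2 X2].
  rewrite (col_iff _ x1 X1), (col_iff _ x2 X2), (spl_same M w m a s c t y x1 x2); tauto.
Qed.

(* Digit m of w is moved to the centre c and then to digit m of w'
   through points lying in two intersecting pieces. *)
Lemma decided_prefix_step m :
  (forall w w', valid D w -> valid D w' -> agree w w' (S m) -> (col w <-> col w')) ->
  forall w w', valid D w -> valid D w' -> agree w w' m -> (col w <-> col w').
Proof.
  intros IH w w' Hw Hw' A.
  destruct Hstar as [c [Hc Hmeet]].
  destruct (Hmeet (w m) (Hw m)) as [s1 [t1 [y1 [Vs1 [Vt1 [Y1 Y1']]]]]].
  destruct (Hmeet (w' m) (Hw' m)) as [s2 [t2 [y2 [Vs2 [Vt2 [Y2 Y2']]]]]].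
  assert (Same : forall a s a' s', a = a' -> agree (spl w m a s) (spl w m a' s') (S m)).
  { intros a s a' s' Ea i Hi. destruct (Nat.eq_dec i m).
    - subst. rewrite !spl_at. auto.
    - rewrite <- !spl_agree by lia. auto. }
  assert (E1 : col w <-> col (spl w m (w m) s1)).
  { apply IH; auto. apply spl_valid; auto. intros i Hi. destruct (Nat.eq_dec i m).
    - subst; rewrite spl_at; auto.
    - apply spl_agree; lia. }
  assert (E3 : col (spl w m c t1) <-> col (spl w m c t2))
    by (apply IH; try apply spl_valid; auto).
  assert (E5 : col (spl w m (w' m) s2) <-> col w').
  { apply IH; auto. apply spl_valid; auto. intros i Hi. destruct (Nat.eq_dec i m).
    - subst; rewrite spl_at; auto.
    - rewrite <- spl_agree by lia. apply A; lia. }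
  rewrite E1, (col_spl_meet w m (w m) s1 c t1 y1), E3,
    <- (col_spl_meet w m (w' m) s2 c t2 y2), E5 by auto.
  tauto.
Qed.

(* Descending from N digits to none, the colour is constant on T: contradiction. *)
Lemma no_separation : False.
Proof.
  destruct decided_uniformly as [N HN].
  assert (Hall : forall j, (j <= N)%nat ->
     forall w w', valid D w -> valid D w' -> agree w w' (N - j) -> (col w <-> col w')).
  { induction j; intros Hj.
    - rewrite Nat.sub_0_r; auto.
    - apply decided_prefix_step. replace (S (N - S j)) with (N - j)%nat by lia. apply IHj; lia. }
  destruct HpU as [p [[w [Hw Hx]] Up]].
  destruct HpV as [q [[w' [Hw' Hx']] Vq]].
  assert (E := Hall N (le_n _) w w' Hw Hw' ltac:(intros i Hi; lia)).
  rewrite (col_iff w p Hx), (col_iff w' q Hx') in E.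
  apply (Hdis q); [exists w'; auto | apply E; auto | auto].
Qed.
End Separation.

Theorem attractor_connected : connected2 (attractor M D).
Proof.
  intros [U [V [HU [HV [Hc [HpU [HpV Hd]]]]]]].
  exact (no_separation U V HU HV Hc HpU HpV Hd).
Qed.
End Connectivity.
Lemma pcv_untail s x k : pcv (fun n => s (n + k)%nat) x -> pcv s x.
Proof. intros [H1 H2]. split; eapply (CV_shift (fun n => _ (s n))); eauto. Qed.

Lemma conv_cons M a s x : conv M s x -> conv M (wcons a s) (mv M (padd a x)).
Proof.
  intros Hx. apply (pcv_untail _ _ 1).
  apply (pcv_ext (fun n => padd (mv M a) (mv M (psum M s n)))).
  - intro n. rewrite Nat.add_comm, psum_shift, (psum_ext M (shiftw 1 (wcons a s)) s n)
      by (intros i _; reflexivity).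
    apply pt_eq; simpl; ring.
  - rewrite mv_padd. apply pcv_padd; [apply pcv_const | apply pcv_mv; auto].
Qed.

Lemma pieces_meet_of_sum M D a b s t x y : valid D s -> valid D t ->
  conv M s x -> conv M t y -> padd a x = padd b y -> pieces_meet M D a b.
Proof.
  intros Hs Ht Hx Hy E. exists s, t, (mv M (padd a x)).
  split; [auto | split; [auto | split]].
  - apply conv_cons; auto.
  - rewrite E. apply conv_cons; auto.
Qed.

(* If A has trace -p and determinant q, then in the
   basis (v, Av) the matrix A becomes the integer matrix
   C = [[0, -q], [1, -p]] (Cayley-Hamilton), whose inverse is Mpq p q, and the
   digits 0, v, k Av become 0, e1, k e2. *)
Definition Mpq (p q : Z) : rmat := RM (- IZR p / IZR q) 1 (- 1 / IZR q) 0.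
Definition Cz (p q : Z) (z : Z * Z) : Z * Z := ((- q * snd z)%Z, (fst z - p * snd z)%Z).
Definition zr (z : Z * Z) : pt := (IZR (fst z), IZR (snd z)).
Definition zsub (a b : Z * Z) : Z * Z := ((fst a - fst b)%Z, (snd a - snd b)%Z).
Definition Dz (k : Z) : list (Z * Z) := [(0, 0); (1, 0); (0, k)]%Z.
Definition dz (k : Z) (i : nat) : Z * Z := nth i (Dz k) (0%Z, 0%Z).
Definition DR (k : Z) : list pt := map zr (Dz k).

(* Cz is the integer inverse of Mpq, i.e. A itself in companion coordinates. *)
Lemma mv_Cz p q z : q <> 0%Z -> mv (Mpq p q) (zr (Cz p q z)) = zr z.
Proof.
  intros hq. assert (IZR q <> 0) by (apply not_0_IZR; auto).
  unfold mv, Mpq, Cz, zr; simpl. apply pt_eq; simpl; rewrite ?minus_IZR, ?mult_IZR, ?opp_IZR; field; auto.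
Qed.

Lemma zr_sub a b : zr (zsub a b) = psub (zr a) (zr b).
Proof. unfold zr, zsub, psub; simpl; rewrite !minus_IZR; auto. Qed.

Lemma DR_in k a : In a (DR k) -> exists i, (i < 3)%nat /\ a = zr (dz k i).
Proof.
  unfold DR, Dz, dz. simpl. intros [H|[H|[H|[]]]]; subst.
  - exists 0%nat; split; auto.
  - exists 1%nat; split; auto.
  - exists 2%nat; split; auto.
Qed.
Lemma dz_in k i : (i < 3)%nat -> In (zr (dz k i)) (DR k).
Proof. intros Hi. unfold DR, dz. apply in_map, nth_In. simpl; lia. Qed.

Lemma DR_bound k d : In d (DR k) -> nrm d <= 1 + Rabs (IZR k).
Proof.
  intros Hd. unfold DR, Dz in Hd. simpl in Hd. unfold zr, nrm in *.
  pose proof (Rabs_pos (IZR k)).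
  destruct Hd as [<-|[<-|[<-|[]]]]; simpl; rewrite ?Rabs_R0, ?Rabs_R1; apply Rmax_lub; lra.
Qed.

(* A walk certificate is a finite list of integer points z,
   each labelled by a pair (i, j) of digit indices, closed under the step
   z |-> C z - (d_i - d_j).  Starting from z0 it yields two digit sequences
   whose expansions differ by exactly z0, since the visited points stay
   bounded while M^n shrinks them. *)
Definition walk_entry : Type := ((Z * Z) * (nat * nat))%type.
Definition step (a b : Z) (i j : nat) : walk_entry := ((a, b), (i, j)).

Definition zpair_eqb (a b : Z * Z) : bool := (Z.eqb (fst a) (fst b) && Z.eqb (snd a) (snd b))%bool.
Lemma zpair_eqb_eq a b : zpair_eqb a b = true -> a = b.
Proof.
  destruct a, b; unfold zpair_eqb; simpl; intros H. apply andb_prop in H as [H1 H2].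
  apply Z.eqb_eq in H1; apply Z.eqb_eq in H2; subst; auto.
Qed.

Fixpoint lookup (L : list walk_entry) (z : Z * Z) : option (nat * nat) :=
  match L with nil => None | (z', ij) :: L' => if zpair_eqb z z' then Some ij else lookup L' z end.

Definition isSome {A} (o : option A) : bool := match o with Some _ => true | None => false end.

Definition next_state (p q k : Z) (L : list walk_entry) (z : Z * Z) : Z * Z :=
  match lookup L z with
  | Some (i, j) => zsub (Cz p q z) (zsub (dz k i) (dz k j))
  | None => z
  end.

Definition check_walk (p q k : Z) (L : list walk_entry) (z0 : Z * Z) : bool :=
  (isSome (lookup L z0) &&
   forallb (fun e => let '(z, (i, j)) := e in
     ((i <? 3)%nat && (j <? 3)%nat && isSome (lookup L (next_state p q k L z)))%bool) L)%bool.

Definition walk_bound (L : list walk_entry) : Z :=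
  fold_right (fun e acc => Z.max (Z.max (Z.abs (fst (fst e))) (Z.abs (snd (fst e)))) acc) 0%Z L.

Lemma lookup_in L z ij : lookup L z = Some ij -> In (z, ij) L.
Proof.
  induction L as [|[z' ij'] L IH]; simpl; intros H; [discriminate|].
  destruct (zpair_eqb z z') eqn:E.
  - apply zpair_eqb_eq in E. injection H; intros; subst. left; reflexivity.
  - right; auto.
Qed.

Lemma walk_bound_ok L z ij : In (z, ij) L -> nrm (zr z) <= IZR (walk_bound L).
Proof.
  induction L as [|e L IH]; simpl; intros H; [destruct H|].
  destruct H as [H|H].
  - subst e. unfold zr, nrm; simpl. apply Rmax_lub; rewrite <- abs_IZR; apply IZR_le; lia.
  - eapply Rle_trans; [apply IH; auto|]. apply IZR_le; lia.
Qed.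

Section Walk.
Variables p q k : Z.
Hypothesis hq : q <> 0%Z.
Let M := Mpq p q.
Hypothesis Hstep : forall x, nrm (mv M x) <= 2 * nrm x.
Hypothesis Hcontr : forall x, nrm (mpow M 4 x) <= /2 * nrm x.
Variable L : list walk_entry.
Variable z0 : Z * Z.
Hypothesis Hck : check_walk p q k L z0 = true.

Definition state (n : nat) : Z * Z := Nat.iter n (next_state p q k L) z0.
Definition label (z : Z * Z) : nat * nat :=
  match lookup L z with Some ij => ij | None => (0%nat, 0%nat) end.
Definition walk_left (n : nat) : pt := zr (dz k (fst (label (state n)))).
Definition walk_right (n : nat) : pt := zr (dz k (snd (label (state n)))).

Lemma state_ok n : exists ij, lookup L (state n) = Some ij /\ (fst ij < 3)%nat /\ (snd ij < 3)%nat.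
Proof.
  unfold check_walk in Hck. apply andb_prop in Hck as [H0 Hall].
  rewrite forallb_forall in Hall.
  assert (G : forall z, isSome (lookup L z) = true ->
     exists ij, lookup L z = Some ij /\ (fst ij < 3)%nat /\ (snd ij < 3)%nat /\
                isSome (lookup L (next_state p q k L z)) = true).
  { intros z Hz. destruct (lookup L z) as [[i j]|] eqn:E; [|discriminate].
    specialize (Hall _ (lookup_in L z (i, j) E)). simpl in Hall.
    apply andb_prop in Hall as [Hij Hn]. apply andb_prop in Hij as [Hi Hj].
    apply Nat.ltb_lt in Hi; apply Nat.ltb_lt in Hj. exists (i, j); auto. }
  assert (Hin : forall n, isSome (lookup L (state n)) = true).
  { intro m; induction m as [|m IH]; [exact H0|]. destruct (G _ IH) as [ij [_ [_ [_ Hn]]]]. exact Hn. }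
  destruct (G _ (Hin n)) as [ij [E [Hi [Hj _]]]]. exists ij; auto.
Qed.

Lemma walk_left_valid : valid (DR k) walk_left.
Proof. intro n. destruct (state_ok n) as [ij [E [Hi Hj]]]. unfold walk_left, label. rewrite E. apply dz_in; auto. Qed.
Lemma walk_right_valid : valid (DR k) walk_right.
Proof. intro n. destruct (state_ok n) as [ij [E [Hi Hj]]]. unfold walk_right, label. rewrite E. apply dz_in; auto. Qed.

Lemma walk_invariant n :
  psub (psum M walk_left n) (psum M walk_right n) = psub (zr z0) (mpow M n (zr (state n))).
Proof.
  induction n.
  - simpl. apply pt_eq; simpl; ring.
  - rewrite !psum_S.
    assert (E : zr (state (S n)) = psub (zr (Cz p q (state n))) (psub (walk_left n) (walk_right n))).
    { destruct (state_ok n) as [[i j] [E _]]. unfold walk_left, walk_right, label. rewrite E. simpl.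
      unfold next_state. rewrite E. rewrite !zr_sub. reflexivity. }
    assert (Hc : mpow M (S n) (zr (Cz p q (state n))) = mpow M n (zr (state n))).
    { rewrite mpow_S'. unfold M. rewrite (mv_Cz p q (state n) hq). reflexivity. }
    rewrite E, mpow_psub, Hc, mpow_psub.
    unfold psub, padd in *. apply pt_eq; simpl; injection IHn; intros; simpl in *; lra.
Qed.

Lemma walk_limits : exists x y, conv M walk_left x /\ conv M walk_right y /\ psub x y = zr z0.
Proof.
  destruct (conv_exists M Hstep Hcontr walk_left _ (fun i => DR_bound k _ (walk_left_valid i))) as [x Hx].
  destruct (conv_exists M Hstep Hcontr walk_right _ (fun i => DR_bound k _ (walk_right_valid i))) as [y Hy].
  exists x, y. split; auto. split; auto.
  assert (Hz : pcv (fun n => mpow M n (zr (state n))) pzero).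
  { apply (pcv_geom_zero _ (14 * IZR (walk_bound L)) rho); [pose proof rho_pos; pose proof rho_lt1; lra|].
    intro n. eapply Rle_trans; [apply decay; auto|].
    destruct (state_ok n) as [ij [E _]]. pose proof (walk_bound_ok L _ _ (lookup_in L _ _ E)).
    pose proof (pow_rho_pos n). nra. }
  assert (Hd := pcv_psub _ _ _ _ Hx Hy).
  apply (pcv_ext _ (fun n => psub (zr z0) (mpow M n (zr (state n))))) in Hd; [|apply walk_invariant].
  rewrite (pcv_unique _ _ _ Hd (pcv_psub _ _ _ _ (pcv_const (zr z0)) Hz)).
  apply pt_eq; simpl; ring.
Qed.
End Walk.
Definition Lf (l1 l2 : R) (x : pt) : R := l1 * fst x + l2 * snd x.
Definition cL (l1 l2 : R) : R := Rabs l1 + Rabs l2.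

Lemma cL_nonneg l1 l2 : 0 <= cL l1 l2.
Proof. unfold cL; pose proof (Rabs_pos l1); pose proof (Rabs_pos l2); lra. Qed.

Lemma Lf_bound l1 l2 z : Rabs (Lf l1 l2 z) <= cL l1 l2 * nrm z.
Proof.
  unfold Lf, cL. eapply Rle_trans; [apply Rabs_triang|]. rewrite !Rabs_mult.
  pose proof (nrm_fst z); pose proof (nrm_snd z); pose proof (Rabs_pos l1); pose proof (Rabs_pos l2).
  nra.
Qed.

Lemma Lf_near l1 l2 p q eps : 0 < eps -> dist2 p q < eps / (cL l1 l2 + 1) ->
  Rabs (Lf l1 l2 q - Lf l1 l2 p) < eps.
Proof.
  intros He Hd. pose proof (cL_nonneg l1 l2).
  replace (Lf l1 l2 q - Lf l1 l2 p) with (- Lf l1 l2 (psub p q)) by (unfold Lf; simpl; ring).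
  rewrite Rabs_Ropp. eapply Rle_lt_trans; [apply Lf_bound|].
  pose proof (nrm_le_dist2 p q). pose proof (nrm_nonneg (psub p q)).
  apply Rle_lt_trans with ((cL l1 l2 + 1) * dist2 p q); [nra|].
  apply Rlt_le_trans with ((cL l1 l2 + 1) * (eps / (cL l1 l2 + 1))).
  - apply Rmult_lt_compat_l; lra.
  - right; field; lra.
Qed.

Lemma open_Lf_lt l1 l2 c : open2 (fun z => Lf l1 l2 z < c).
Proof.
  intros p Hp. pose proof (cL_nonneg l1 l2).
  exists ((c - Lf l1 l2 p) / (cL l1 l2 + 1)). split; [apply Rdiv_lt_0_compat; lra|].
  intros q Hq. pose proof (Lf_near l1 l2 p q (c - Lf l1 l2 p) ltac:(lra) Hq).
  apply Rabs_def2 in H0. lra.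
Qed.
Lemma open_Lf_gt l1 l2 c : open2 (fun z => c < Lf l1 l2 z).
Proof.
  intros p Hp. pose proof (cL_nonneg l1 l2).
  exists ((Lf l1 l2 p - c) / (cL l1 l2 + 1)). split; [apply Rdiv_lt_0_compat; lra|].
  intros q Hq. pose proof (Lf_near l1 l2 p q (Lf l1 l2 p - c) ltac:(lra) Hq).
  apply Rabs_def2 in H0. lra.
Qed.

Lemma Lf_pcv l1 l2 s x : pcv s x -> Un_cv (fun n => Lf l1 l2 (s n)) (Lf l1 l2 x).
Proof. intros [Hf Hs]. unfold Lf. apply CV_plus; apply CV_mult; auto; apply cv_const. Qed.

Definition max3 (a b c : R) := Rmax a (Rmax b c).
Definition min3 (a b c : R) := Rmin a (Rmin b c).
Definition e1 : pt := (1, 0).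

(* For digits {0, e1, K f} with K >= 2, a functional
   Lf separates the points of T with first digit K f from those with first
   digit 0 or e1.  The bounds are computed from the first N terms exactly and
   the tail is controlled by orbit_sum_bound; every bound is affine in
   t = K - 2, so checking the coefficients of t once covers all K >= 2. *)
Section SeparatingFunctional.
Variable M : rmat.
Hypothesis Hstep : forall x, nrm (mv M x) <= 2 * nrm x.
Hypothesis Hcontr : forall x, nrm (mpow M 4 x) <= /2 * nrm x.
Variable f : pt.
Variable K : R.
Hypothesis HK : 2 <= K.
Variables l1 l2 : R.
Variable N : nat.
Hypothesis HN : (1 <= N)%nat.

Let L := Lf l1 l2.
Definition Dsep : list pt := [pzero; e1; pscale K f].
(* UB0 + t UB1 bounds Lf from above on
   the pieces of 0 and e1, and LB0 + t LB1 from below on the piece of K f;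
   tA and tB bound the tail beyond position N. *)
Definition al (i : nat) : R := Lf l1 l2 (mpow M (S i) e1).
Definition be (i : nat) : R := Lf l1 l2 (mpow M (S i) f).
Definition tA : R := cL l1 l2 * 30 * (nrm (mpow M (S N) e1) + 2 * nrm (mpow M (S N) f)).
Definition tB : R := cL l1 l2 * 30 * nrm (mpow M (S N) f).
Definition UB0 : R := Rmax 0 (al 0) + rsum (fun i => max3 0 (al (S i)) (2 * be (S i))) (N - 1) + tA.
Definition UB1 : R := rsum (fun i => Rmax (be (S i)) 0) (N - 1) + tB.
Definition LB0 : R := 2 * be 0 + rsum (fun i => min3 0 (al (S i)) (2 * be (S i))) (N - 1) - tA.
Definition LB1 : R := be 0 + rsum (fun i => Rmin (be (S i)) 0) (N - 1) - tB.
Hypothesis Hgap0 : UB0 < LB0.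
Hypothesis Hgap1 : UB1 <= LB1.

Let t := K - 2.
Lemma t_nonneg : 0 <= t. Proof. unfold t; lra. Qed.

Definition tm (w : nat -> pt) (i : nat) : R := L (mpow M (S i) (w i)).

Lemma Lf_psum w n : L (psum M w n) = rsum (tm w) n.
Proof.
  induction n; simpl rsum; rewrite <- ?IHn; unfold tm, L, Lf; simpl; ring.
Qed.

Lemma tm_cases w i : In (w i) Dsep -> tm w i = 0 \/ tm w i = al i \/ tm w i = K * be i.
Proof.
  intros H. unfold tm, al, be, L. destruct H as [E|[E|[E|[]]]]; rewrite <- E.
  - left. rewrite mpow_zero. unfold Lf, pzero; simpl; ring.
  - right; left; auto.
  - right; right. rewrite mpow_pscale. unfold Lf, pscale; simpl; ring.
Qed.

Lemma tm_upper w i : In (w i) Dsep -> tm w i <= max3 0 (al i) (2 * be i) + t * Rmax (be i) 0.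
Proof.
  intros H. pose proof t_nonneg. unfold max3.
  pose proof (Rmax_l 0 (Rmax (al i) (2 * be i))). pose proof (Rmax_r 0 (Rmax (al i) (2 * be i))).
  pose proof (Rmax_l (al i) (2 * be i)). pose proof (Rmax_r (al i) (2 * be i)).
  pose proof (Rmax_l (be i) 0). pose proof (Rmax_r (be i) 0).
  assert (0 <= t * Rmax (be i) 0) by (apply Rmult_le_pos; lra).
  assert (t * be i <= t * Rmax (be i) 0) by (apply Rmult_le_compat_l; lra).
  destruct (tm_cases w i H) as [E|[E|E]]; rewrite E; unfold t in *; nra.
Qed.

Lemma tm_lower w i : In (w i) Dsep -> min3 0 (al i) (2 * be i) + t * Rmin (be i) 0 <= tm w i.
Proof.
  intros H. pose proof t_nonneg. unfold min3.
  pose proof (Rmin_l 0 (Rmin (al i) (2 * be i))). pose proof (Rmin_r 0 (Rmin (al i) (2 * be i))).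
  pose proof (Rmin_l (al i) (2 * be i)). pose proof (Rmin_r (al i) (2 * be i)).
  pose proof (Rmin_l (be i) 0). pose proof (Rmin_r (be i) 0).
  assert (t * Rmin (be i) 0 <= 0) by nra.
  assert (t * Rmin (be i) 0 <= t * be i) by (apply Rmult_le_compat_l; lra).
  destruct (tm_cases w i H) as [E|[E|E]]; rewrite E; unfold t in *; nra.
Qed.

Lemma tm_abs w i : In (w i) Dsep ->
  Rabs (tm w i) <= cL l1 l2 * nrm (mpow M (S i) e1) + (2 + t) * (cL l1 l2 * nrm (mpow M (S i) f)).
Proof.
  intros H. pose proof t_nonneg.
  pose proof (Lf_bound l1 l2 (mpow M (S i) e1)). pose proof (Lf_bound l1 l2 (mpow M (S i) f)).
  pose proof (Rabs_pos (al i)). pose proof (Rabs_pos (be i)).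
  pose proof (Rabs_pos (Lf l1 l2 (mpow M (S i) e1))). pose proof (Rabs_pos (Lf l1 l2 (mpow M (S i) f))).
  assert ((2 + t) * Rabs (be i) <= (2 + t) * (cL l1 l2 * nrm (mpow M (S i) f)))
    by (apply Rmult_le_compat_l; unfold al, be in *; lra).
  destruct (tm_cases w i H) as [E|[E|E]]; rewrite E.
  - rewrite Rabs_R0. nra.
  - unfold al, be in *. nra.
  - rewrite Rabs_mult, (Rabs_pos_eq K) by lra. replace K with (2 + t) by (unfold t; ring). nra.
Qed.

Lemma tail_sum w m : valid Dsep w -> Rabs (rsum (fun j => tm w (N + j)%nat) m) <= tA + t * tB.
Proof.
  intros Hw. pose proof t_nonneg. pose proof (cL_nonneg l1 l2) as cL0.
  set (ge := fun j => nrm (mpow M j (mpow M (S N) e1))).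
  set (gf := fun j => nrm (mpow M j (mpow M (S N) f))).
  eapply Rle_trans; [apply rsum_abs|].
  apply Rle_trans with (rsum (fun j => cL l1 l2 * ge j + ((2 + t) * cL l1 l2) * gf j) m).
  - apply rsum_le. intros j _. eapply Rle_trans; [apply tm_abs; apply Hw|].
    unfold ge, gf. rewrite <- !mpow_plus. replace (j + S N)%nat with (S (N + j)) by lia. lra.
  - rewrite rsum_lin. unfold tA, tB.
    pose proof (orbit_sum_bound M Hstep Hcontr m (mpow M (S N) e1)) as Ge.
    pose proof (orbit_sum_bound M Hstep Hcontr m (mpow M (S N) f)) as Gf.
    fold ge in Ge. fold gf in Gf.
    assert (cL l1 l2 * rsum ge m <= cL l1 l2 * (30 * nrm (mpow M (S N) e1)))
      by (apply Rmult_le_compat_l; auto).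
    assert ((2 + t) * cL l1 l2 * rsum gf m <= (2 + t) * cL l1 l2 * (30 * nrm (mpow M (S N) f)))
      by (apply Rmult_le_compat_l; nra).
    lra.
Qed.

Lemma split_sum w n : (N <= n)%nat ->
  rsum (tm w) n = tm w 0 + rsum (fun i => tm w (S i)) (N - 1) + rsum (fun j => tm w (N + j)%nat) (n - N).
Proof.
  intros Hn. replace n with (N + (n - N))%nat at 1 by lia. rewrite rsum_plus.
  replace N with (1 + (N - 1))%nat at 1 by lia. rewrite rsum_plus. simpl. ring.
Qed.

Lemma upper_sum w n : valid Dsep w -> (w 0%nat = pzero \/ w 0%nat = e1) -> (N <= n)%nat ->
  rsum (tm w) n <= UB0 + t * UB1.
Proof.
  intros Hw H0 Hn. rewrite split_sum by auto.
  assert (Hh : tm w 0 <= Rmax 0 (al 0)).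
  { unfold tm, al, L. destruct H0 as [E|E]; rewrite E; [|apply Rmax_r].
    rewrite mpow_zero. unfold Lf, pzero; simpl. replace (l1 * 0 + l2 * 0) with 0 by ring. apply Rmax_l. }
  assert (Hm : rsum (fun i => tm w (S i)) (N - 1) <=
     rsum (fun i => max3 0 (al (S i)) (2 * be (S i))) (N - 1) + t * rsum (fun i => Rmax (be (S i)) 0) (N - 1)).
  { rewrite <- (Rmult_1_l (rsum (fun i => max3 _ _ _) _)), <- rsum_lin.
    apply rsum_le. intros i _. rewrite Rmult_1_l. apply tm_upper. apply Hw. }
  pose proof (tail_sum w (n - N) Hw) as Ht. apply Rabs_le_between in Ht.
  unfold UB0, UB1. lra.
Qed.

Lemma lower_sum w n : valid Dsep w -> w 0%nat = pscale K f -> (N <= n)%nat ->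
  LB0 + t * LB1 <= rsum (tm w) n.
Proof.
  intros Hw H0 Hn. rewrite split_sum by auto.
  assert (Hh : tm w 0 = 2 * be 0 + t * be 0).
  { unfold tm, be, L. rewrite H0, mpow_pscale. unfold Lf, pscale, t; simpl; ring. }
  assert (Hm : rsum (fun i => min3 0 (al (S i)) (2 * be (S i))) (N - 1) + t * rsum (fun i => Rmin (be (S i)) 0) (N - 1)
     <= rsum (fun i => tm w (S i)) (N - 1)).
  { rewrite <- (Rmult_1_l (rsum (fun i => min3 _ _ _) _)), <- rsum_lin.
    apply rsum_le. intros i _. rewrite Rmult_1_l. apply tm_lower. apply Hw. }
  pose proof (tail_sum w (n - N) Hw) as Ht. apply Rabs_le_between in Ht.
  unfold LB0, LB1. lra.
Qed.

Let c := (UB0 + LB0) / 2 + t * UB1.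

Lemma low_pieces w x : valid Dsep w -> (w 0%nat = pzero \/ w 0%nat = e1) -> conv M w x -> L x < c.
Proof.
  intros Hw H0 Hx. apply Rle_lt_trans with (UB0 + t * UB1); [|unfold c; lra].
  apply (cv_le_ev _ _ _ N (Lf_pcv l1 l2 _ _ Hx)). intros n Hn. rewrite Lf_psum. apply upper_sum; auto.
Qed.

Lemma high_pieces w x : valid Dsep w -> w 0%nat = pscale K f -> conv M w x -> c < L x.
Proof.
  intros Hw H0 Hx. pose proof t_nonneg.
  apply Rlt_le_trans with (LB0 + t * LB1).
  - unfold c. assert (t * UB1 <= t * LB1) by (apply Rmult_le_compat_l; auto). lra.
  - apply (cv_ge_ev _ _ _ N (Lf_pcv l1 l2 _ _ Hx)). intros n Hn. rewrite Lf_psum. apply lower_sum; auto.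
Qed.

Lemma Dsep_bound d : In d Dsep -> nrm d <= 1 + nrm (pscale K f).
Proof.
  intros Hd. pose proof (nrm_nonneg (pscale K f)).
  destruct Hd as [E|[E|[E|[]]]]; rewrite <- E; try lra.
  - rewrite nrm_pzero. lra.
  - assert (nrm e1 <= 1) by (unfold nrm, e1; simpl; rewrite Rabs_R0, Rabs_R1; apply Rmax_lub; lra).
    lra.
Qed.

Lemma piece_point a : In a Dsep -> exists x, conv M (wcons a (fun _ => pzero)) x.
Proof.
  intros Ha. apply (conv_exists M Hstep Hcontr _ _ (fun i => Dsep_bound _ (wcons_valid _ a _ Ha (fun _ => or_introl eq_refl) i))).
Qed.

Theorem sep_not_connected : ~ connected2 (attractor M Dsep).
Proof.
  intros Hc. apply Hc.
  assert (Hz : valid Dsep (fun _ => pzero)) by (intro; left; reflexivity).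
  exists (fun z => L z < c), (fun z => c < L z).
  split; [apply open_Lf_lt|]. split; [apply open_Lf_gt|]. split; [|split; [|split]].
  - intros x [w [Hw Hx]]. destruct (Hw 0%nat) as [E|[E|[E|[]]]].
    + left. apply (low_pieces w); auto.
    + left. apply (low_pieces w); auto.
    + right. apply (high_pieces w); auto.
  - destruct (piece_point pzero (or_introl eq_refl)) as [x Hx].
    exists x. split; [exists (wcons pzero (fun _ => pzero)); split; auto; apply wcons_valid; simpl; auto|].
    apply (low_pieces (wcons pzero (fun _ => pzero))); auto. apply wcons_valid; simpl; auto.
  - destruct (piece_point (pscale K f) (or_intror (or_intror (or_introl eq_refl)))) as [x Hx].
    assert (Hv : valid Dsep (wcons (pscale K f) (fun _ => pzero))) by (apply wcons_valid; simpl; auto).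
    exists x. split; [exists (wcons (pscale K f) (fun _ => pzero)); auto|].
    apply (high_pieces _ _ Hv); auto.
  - intros p _ H1 H2. lra.
Qed.
End SeparatingFunctional.
(* Exact rational arithmetic, used to check the numerical hypotheses of the
   contraction and separation lemmas by computation.  Every operation
   normalises with Qred to keep the numbers small. *)
Definition qmat : Type := (Q * Q * Q * Q)%type.
Definition rm_of (m : qmat) : rmat :=
  let '(a, b, c, d) := m in RM (Q2R a) (Q2R b) (Q2R c) (Q2R d).
Definition qr (x : Q * Q) : pt := (Q2R (fst x), Q2R (snd x)).
Definition qmv (m : qmat) (x : Q * Q) : Q * Q :=
  let '(a, b, c, d) := m in (Qred (a * fst x + b * snd x)%Q, Qred (c * fst x + d * snd x)%Q).
Fixpoint qmpow (m : qmat) (n : nat) (x : Q * Q) : Q * Q :=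
  match n with O => x | S n' => qmv m (qmpow m n' x) end.
Definition qmmul (m1 m2 : qmat) : qmat :=
  let '(a, b, c, d) := m1 in let '(a', b', c', d') := m2 in
  (Qred (a * a' + b * c')%Q, Qred (a * b' + b * d')%Q, Qred (c * a' + d * c')%Q, Qred (c * b' + d * d')%Q).
Fixpoint qmatpow (m : qmat) (n : nat) : qmat :=
  match n with O => (1, 0, 0, 1)%Q | S n' => qmmul m (qmatpow m n') end.

Definition qmax (a b : Q) : Q := if Qle_bool a b then b else a.
Definition qmin (a b : Q) : Q := if Qle_bool a b then a else b.
Definition qabs (a : Q) : Q := qmax a (- a).
Definition qnrm (x : Q * Q) : Q := qmax (qabs (fst x)) (qabs (snd x)).
Fixpoint qsum (g : nat -> Q) (n : nat) : Q := match n with O => 0%Q | S n' => Qred (qsum g n' + g n')%Q end.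
Lemma Q2R_red a : Q2R (Qred a) = Q2R a.
Proof. apply Qeq_eqR, Qred_correct. Qed.

Lemma qmv_ok m x : mv (rm_of m) (qr x) = qr (qmv m x).
Proof.
  destruct m as [[[a b] c] d]. unfold mv, rm_of, qr, qmv; cbn [fst snd ra rb rc rd].
  rewrite !Q2R_red, !Q2R_plus, !Q2R_mult. reflexivity.
Qed.
Lemma qmpow_ok m n x : mpow (rm_of m) n (qr x) = qr (qmpow m n x).
Proof. induction n; simpl; auto. rewrite IHn, qmv_ok; auto. Qed.

Lemma qmmul_ok m1 m2 x : mv (rm_of m1) (mv (rm_of m2) x) = mv (rm_of (qmmul m1 m2)) x.
Proof.
  destruct m1 as [[[a b] c] d]. destruct m2 as [[[a' b'] c'] d'].
  unfold mv, rm_of, qmmul; cbn [fst snd ra rb rc rd]. rewrite !Q2R_red, !Q2R_plus, !Q2R_mult.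
  apply pt_eq; simpl; ring.
Qed.
Lemma qmatpow_ok m n x : mpow (rm_of m) n x = mv (rm_of (qmatpow m n)) x.
Proof.
  induction n; simpl.
  - unfold mv; simpl. rewrite RMicromega.Q2R_1, RMicromega.Q2R_0. apply pt_eq; simpl; ring.
  - rewrite IHn, qmmul_ok. reflexivity.
Qed.

Lemma qmax_ok a b : Q2R (qmax a b) = Rmax (Q2R a) (Q2R b).
Proof.
  unfold qmax. destruct (Qle_bool a b) eqn:E.
  - apply Qle_bool_iff in E. apply Qle_Rle in E. rewrite Rmax_right; auto.
  - assert (~ (a <= b)%Q) by (intro H; apply Qle_bool_iff in H; congruence).
    apply Qnot_le_lt in H. apply Qlt_Rlt in H. rewrite Rmax_left; lra.
Qed.
Lemma qmin_ok a b : Q2R (qmin a b) = Rmin (Q2R a) (Q2R b).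
Proof.
  unfold qmin. destruct (Qle_bool a b) eqn:E.
  - apply Qle_bool_iff in E. apply Qle_Rle in E. rewrite Rmin_left; auto.
  - assert (~ (a <= b)%Q) by (intro H; apply Qle_bool_iff in H; congruence).
    apply Qnot_le_lt in H. apply Qlt_Rlt in H. rewrite Rmin_right; lra.
Qed.
Lemma qabs_ok a : Q2R (qabs a) = Rabs (Q2R a).
Proof.
  unfold qabs. rewrite qmax_ok, Q2R_opp. unfold Rabs, Rmax.
  destruct (Rcase_abs (Q2R a)); destruct (Rle_dec (Q2R a) (- Q2R a)); lra.
Qed.
Lemma qnrm_ok x : Q2R (qnrm x) = nrm (qr x).
Proof. unfold qnrm, nrm, qr; simpl. rewrite qmax_ok, !qabs_ok. reflexivity. Qed.
Lemma qsum_ok g n : Q2R (qsum g n) = rsum (fun i => Q2R (g i)) n.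
Proof. induction n; cbn [qsum rsum]. apply RMicromega.Q2R_0. rewrite Q2R_red, Q2R_plus, IHn. reflexivity. Qed.

Definition rownorm (m : qmat) : Q :=
  let '(a, b, c, d) := m in qmax (qabs a + qabs b) (qabs c + qabs d).

Lemma rownorm_bound m c x : Q2R (rownorm m) <= c -> nrm (mv (rm_of m) x) <= c * nrm x.
Proof.
  intros H. eapply Rle_trans; [apply mv_bound|]. apply Rmult_le_compat_r; [apply nrm_nonneg|].
  destruct m as [[[a b] d'] e]. unfold rownorm in H. simpl.
  rewrite qmax_ok, !Q2R_plus, !qabs_ok in H. auto.
Qed.

Definition contr_check (m : qmat) : bool :=
  (Qle_bool (rownorm m) 2 && Qle_bool (rownorm (qmatpow m 4)) (1#2))%bool.

Lemma contr_ok m : contr_check m = true ->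
  (forall x, nrm (mv (rm_of m) x) <= 2 * nrm x) /\ (forall x, nrm (mpow (rm_of m) 4 x) <= /2 * nrm x).
Proof.
  unfold contr_check. intros H. apply andb_prop in H as [Ha Hb].
  apply RMicromega.Qle_true in Ha. apply RMicromega.Qle_true in Hb.
  split; intro x.
  - apply rownorm_bound. replace 2 with (Q2R 2) by (unfold Q2R; simpl; field). auto.
  - rewrite qmatpow_ok. apply rownorm_bound. replace (/2) with (Q2R (1#2)) by (unfold Q2R; simpl; field). auto.
Qed.

Section QSep.
Variable m : qmat.
Variable s : Q.
Variables l1 l2 : Q.
Variable N : nat.
Definition qLf (z : Q * Q) : Q := (l1 * fst z + l2 * snd z)%Q.
Definition qal (i : nat) : Q := qLf (qmpow m (S i) (1, 0)%Q).
Definition qbe (i : nat) : Q := qLf (qmpow m (S i) (0, s)%Q).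
Definition qcL : Q := (qabs l1 + qabs l2)%Q.
Definition qtA : Q := (qcL * 30 * (qnrm (qmpow m (S N) (1, 0)%Q) + 2 * qnrm (qmpow m (S N) (0, s)%Q)))%Q.
Definition qtB : Q := (qcL * 30 * qnrm (qmpow m (S N) (0, s)%Q))%Q.
Definition qUB0 : Q := (qmax 0 (qal 0) + qsum (fun i => qmax 0 (qmax (qal (S i)) (2 * qbe (S i)))) (N - 1) + qtA)%Q.
Definition qUB1 : Q := (qsum (fun i => qmax (qbe (S i)) 0) (N - 1) + qtB)%Q.
Definition qLB0 : Q := (2 * qbe 0 + qsum (fun i => qmin 0 (qmin (qal (S i)) (2 * qbe (S i)))) (N - 1) - qtA)%Q.
Definition qLB1 : Q := (qbe 0 + qsum (fun i => qmin (qbe (S i)) 0) (N - 1) - qtB)%Q.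
Definition sep_check : bool := (negb (Qle_bool qLB0 qUB0) && Qle_bool qUB1 qLB1)%bool.

Lemma e1_q : e1 = qr (1, 0)%Q.
Proof. unfold e1, qr; simpl. rewrite RMicromega.Q2R_1, RMicromega.Q2R_0. reflexivity. Qed.
Lemma Lf_q z : Lf (Q2R l1) (Q2R l2) (qr z) = Q2R (qLf z).
Proof. unfold Lf, qLf, qr. rewrite Q2R_plus, !Q2R_mult. reflexivity. Qed.
Lemma al_q i : al (rm_of m) (Q2R l1) (Q2R l2) i = Q2R (qal i).
Proof. unfold al, qal. rewrite e1_q, qmpow_ok, Lf_q. reflexivity. Qed.
Lemma be_q i : be (rm_of m) (qr (0, s)%Q) (Q2R l1) (Q2R l2) i = Q2R (qbe i).
Proof. unfold be, qbe. rewrite qmpow_ok, Lf_q. reflexivity. Qed.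
Lemma cL_q : cL (Q2R l1) (Q2R l2) = Q2R qcL.
Proof. unfold cL, qcL. rewrite Q2R_plus, !qabs_ok. reflexivity. Qed.
Lemma Q2R_30 : Q2R 30 = 30. Proof. unfold Q2R; simpl; field. Qed.
Lemma Q2R_2 : Q2R 2 = 2. Proof. unfold Q2R; simpl; field. Qed.
Lemma tA_q : tA (rm_of m) (qr (0, s)%Q) (Q2R l1) (Q2R l2) N = Q2R qtA.
Proof.
  unfold tA, qtA. rewrite cL_q, !Q2R_mult, Q2R_plus, Q2R_mult, Q2R_30, Q2R_2, !qnrm_ok, <- !qmpow_ok, <- e1_q.
  reflexivity.
Qed.
Lemma tB_q : tB (rm_of m) (qr (0, s)%Q) (Q2R l1) (Q2R l2) N = Q2R qtB.
Proof.
  unfold tB, qtB. rewrite cL_q, !Q2R_mult, Q2R_30, !qnrm_ok, <- !qmpow_ok. reflexivity.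
Qed.

Lemma sep_check_ok : sep_check = true ->
  UB0 (rm_of m) (qr (0, s)%Q) (Q2R l1) (Q2R l2) N < LB0 (rm_of m) (qr (0, s)%Q) (Q2R l1) (Q2R l2) N /\
  UB1 (rm_of m) (qr (0, s)%Q) (Q2R l1) (Q2R l2) N <= LB1 (rm_of m) (qr (0, s)%Q) (Q2R l1) (Q2R l2) N.
Proof.
  unfold sep_check. intros H. apply andb_prop in H as [Ha Hb].
  assert (EU0 : UB0 (rm_of m) (qr (0, s)%Q) (Q2R l1) (Q2R l2) N = Q2R qUB0).
  { unfold UB0, qUB0. rewrite !Q2R_plus, qmax_ok, RMicromega.Q2R_0, al_q, tA_q, qsum_ok. f_equal. f_equal.
    apply rsum_ext. intros i _. unfold max3. rewrite !qmax_ok, RMicromega.Q2R_0, Q2R_mult, Q2R_2, al_q, be_q.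
    reflexivity. }
  assert (EL0 : LB0 (rm_of m) (qr (0, s)%Q) (Q2R l1) (Q2R l2) N = Q2R qLB0).
  { unfold LB0, qLB0. rewrite !Q2R_minus, !Q2R_plus, Q2R_mult, Q2R_2, be_q, tA_q, qsum_ok. f_equal. f_equal.
    apply rsum_ext. intros i _. unfold min3. rewrite !qmin_ok, RMicromega.Q2R_0, Q2R_mult, Q2R_2, al_q, be_q.
    reflexivity. }
  assert (EU1 : UB1 (rm_of m) (qr (0, s)%Q) (Q2R l1) (Q2R l2) N = Q2R qUB1).
  { unfold UB1, qUB1. rewrite Q2R_plus, tB_q, qsum_ok. f_equal.
    apply rsum_ext. intros i _. rewrite qmax_ok, RMicromega.Q2R_0, be_q. reflexivity. }
  assert (EL1 : LB1 (rm_of m) (qr (0, s)%Q) (Q2R l1) (Q2R l2) N = Q2R qLB1).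
  { unfold LB1, qLB1. rewrite Q2R_minus, Q2R_plus, be_q, tB_q, qsum_ok. f_equal. f_equal.
    apply rsum_ext. intros i _. rewrite qmin_ok, RMicromega.Q2R_0, be_q. reflexivity. }
  rewrite EU0, EL0, EU1, EL1. split.
  - destruct (Qle_bool qLB0 qUB0) eqn:E; [discriminate|].
    assert (~ (qLB0 <= qUB0)%Q) by (intro H; apply Qle_bool_iff in H; congruence).
    apply Qnot_le_lt in H. apply Qlt_Rlt; auto.
  - apply RMicromega.Qle_true; auto.
Qed.
End QSep.


Definition qM (p q : Z) : qmat := (Qred (- inject_Z p / inject_Z q), 1, Qred (-1 / inject_Z q), 0)%Q.

Lemma Q2R_inj z : Q2R (inject_Z z) = IZR z.
Proof. unfold Q2R, inject_Z; simpl. field. Qed.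

Lemma Mpq_q p q : q <> 0%Z -> Mpq p q = rm_of (qM p q).
Proof.
  intros hq. assert (Hq : ~ (inject_Z q == 0)%Q).
  { intro H. apply hq. unfold Qeq in H; simpl in H. lia. }
  assert (IZR q <> 0) by (apply not_0_IZR; auto).
  unfold Mpq, qM, rm_of. rewrite !Q2R_red, !Q2R_div, Q2R_opp, !Q2R_inj by auto.
  rewrite RMicromega.Q2R_1, RMicromega.Q2R_0.
  replace (Q2R (-1)) with (-1) by (unfold Q2R; simpl; field). reflexivity.
Qed.
(* Certificate that T(Mpq p q, DR k) is connected: the centre digit c and
   walks showing that the piece of c meets the pieces of both other digits. *)
Record conn_cert := ConnCert {
  centre : nat; other1 : nat; other2 : nat;
  walk1 : list walk_entry; walk2 : list walk_entry }.

Definition perm_ok (c a1 a2 : nat) : bool :=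
  ((c <? 3) && (a1 <? 3) && (a2 <? 3) && negb (c =? a1) && negb (c =? a2) && negb (a1 =? a2))%nat.

Definition conn_cert_ok (p q k : Z) (cc : conn_cert) : bool :=
  (perm_ok (centre cc) (other1 cc) (other2 cc)
   && check_walk p q k (walk1 cc) (zsub (dz k (other1 cc)) (dz k (centre cc)))
   && check_walk p q k (walk2 cc) (zsub (dz k (other2 cc)) (dz k (centre cc))))%bool.

Section CompanionCase.
Variables p q : Z.
Hypothesis hq : q <> 0%Z.
Hypothesis Hstep : forall x, nrm (mv (Mpq p q) x) <= 2 * nrm x.
Hypothesis Hcontr : forall x, nrm (mpow (Mpq p q) 4 x) <= /2 * nrm x.

Lemma walk_pieces_meet k L a c : (a < 3)%nat ->
  check_walk p q k L (zsub (dz k a) (dz k c)) = true ->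
  pieces_meet (Mpq p q) (DR k) (zr (dz k a)) (zr (dz k c)).
Proof.
  intros Ha HL.
  destruct (walk_limits p q k hq Hstep Hcontr L _ HL) as [x [y [Hx [Hy Exy]]]].
  apply (pieces_meet_of_sum _ _ _ _ _ _ y x (walk_right_valid p q k L _ HL)
           (walk_left_valid p q k L _ HL) Hy Hx).
  rewrite zr_sub in Exy. unfold psub in Exy. injection Exy; intros E2 E1.
  apply pt_eq; simpl; lra.
Qed.

Lemma pieces_meet_refl k a : In a (DR k) -> pieces_meet (Mpq p q) (DR k) a a.
Proof.
  intros Ha. set (w := fun _ : nat => a).
  assert (Vw : valid (DR k) w) by (intro; exact Ha).
  destruct (conv_exists _ Hstep Hcontr w _ (fun i => DR_bound k _ (Vw i))) as [x Hx].
  apply (pieces_meet_of_sum _ _ _ _ w w x x Vw Vw Hx Hx eq_refl).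
Qed.

Lemma conn_cert_sound k cc : conn_cert_ok p q k cc = true -> connected2 (attractor (Mpq p q) (DR k)).
Proof.
  destruct cc as [c a1 a2 L1 L2]. unfold conn_cert_ok; simpl.
  intros H. apply andb_prop in H as [H HL2]. apply andb_prop in H as [Hp HL1].
  unfold perm_ok in Hp. repeat rewrite Bool.andb_true_iff in Hp.
  destruct Hp as [[[[[Hc3 Ha1] Ha2] Hca1] Hca2] Ha12].
  apply Nat.ltb_lt in Hc3, Ha1, Ha2.
  apply Bool.negb_true_iff, Nat.eqb_neq in Hca1, Hca2, Ha12.
  apply (attractor_connected _ Hstep Hcontr (DR k) _ (DR_bound k)).
  exists (zr (dz k c)). split; [apply dz_in; auto|].
  intros a Ha. destruct (DR_in k a Ha) as [i [Hi ->]].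
  assert (i = c \/ i = a1 \/ i = a2) as [-> | [-> | ->]] by lia.
  - apply pieces_meet_refl; auto.
  - apply (walk_pieces_meet k L1); auto.
  - apply (walk_pieces_meet k L2); auto.
Qed.

Lemma DR_sep_pos k : DR k = Dsep (qr (0, 1)%Q) (IZR k).
Proof.
  unfold DR, Dz, Dsep, e1, qr, zr, pzero, pscale; simpl.
  rewrite RMicromega.Q2R_0, RMicromega.Q2R_1. repeat f_equal; ring.
Qed.
Lemma DR_sep_neg k : DR k = Dsep (qr (0, -1)%Q) (IZR (- k)).
Proof.
  unfold DR, Dz, Dsep, e1, qr, zr, pzero, pscale; simpl.
  rewrite RMicromega.Q2R_0. replace (Q2R (-1)) with (-1) by (unfold Q2R; simpl; field).
  rewrite opp_IZR. repeat f_equal; ring.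
Qed.

Lemma sep_cert_sound (s l1 l2 : Q) K k : contr_check (qM p q) = true ->
  sep_check (qM p q) s l1 l2 40 = true -> DR k = Dsep (qr (0, s)%Q) K -> 2 <= K ->
  ~ connected2 (attractor (Mpq p q) (DR k)).
Proof.
  intros Hc Hs ED HK.
  destruct (contr_ok _ Hc) as [H1 H4].
  destruct (sep_check_ok _ _ _ _ _ Hs) as [G0 G1].
  rewrite ED, (Mpq_q p q hq). apply (sep_not_connected _ H1 H4 _ _ HK _ _ 40 ltac:(lia) G0 G1).
Qed.
End CompanionCase.

(* A certificate for one companion matrix Mpq p q: connectivity certificates
   for k = 1 and k = -1, and separating functionals for k >= 2 and k <= -2. *)
Record case_cert := CaseCert {
  cp : Z; cq : Z;
  sep_pos1 : Q; sep_pos2 : Q; sep_neg1 : Q; sep_neg2 : Q;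
  conn_one : conn_cert; conn_minus_one : conn_cert }.

Definition case_cert_ok (c : case_cert) : bool :=
  let p := cp c in let q := cq c in
  (negb (Z.eqb q 0) && contr_check (qM p q)
   && conn_cert_ok p q 1 (conn_one c) && conn_cert_ok p q (-1) (conn_minus_one c)
   && sep_check (qM p q) 1 (sep_pos1 c) (sep_pos2 c) 40
   && sep_check (qM p q) (-1) (sep_neg1 c) (sep_neg2 c) 40)%bool.

Lemma case_cert_sound c : case_cert_ok c = true ->
  forall k, k <> 0%Z -> (connected2 (attractor (Mpq (cp c) (cq c)) (DR k)) <-> (k = 1 \/ k = -1)%Z).
Proof.
  unfold case_cert_ok. intros H k Hk. repeat rewrite Bool.andb_true_iff in H.
  destruct H as [[[[[Hq Hc] Hk1] Hkm1] Hsp] Hsn].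
  assert (hq : cq c <> 0%Z) by (apply Bool.negb_true_iff, Z.eqb_neq in Hq; auto).
  destruct (contr_ok _ Hc) as [H1 H4]. rewrite <- (Mpq_q _ _ hq) in H1, H4.
  split.
  - intros Hconn. destruct (Z_lt_le_dec k 2) as [Hk2|Hk2]; [destruct (Z_lt_le_dec (-2) k) as [Hk3|Hk3]|].
    + lia.
    + exfalso. apply (sep_cert_sound _ _ hq _ _ _ (IZR (- k)) k Hc Hsn (DR_sep_neg k)); auto.
      apply IZR_le; lia.
    + exfalso. apply (sep_cert_sound _ _ hq _ _ _ (IZR k) k Hc Hsp (DR_sep_pos k)); auto.
      apply IZR_le; lia.
  - intros [-> | ->]; eapply conn_cert_sound; eauto.
Qed.
(* Certificates for the ten companion matrices Mpq p q arising from expanding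
   integer matrices with |det| = 3 (see companion_classification below). *)
Definition certificates : list case_cert := [
  CaseCert (-3) 3 1 2 (-1) (-2)
    (ConnCert 1 0 2
      [step (-1) 0 0 1; step 1 (-1) 0 2; step 3 (-1) 2 0]
      [step (-1) 1 2 0; step (-3) 1 0 2])
    (ConnCert 0 1 2
      [step 1 0 0 0; step 0 1 1 2; step (-4) 2 0 1; step (-5) 2 2 1]
      [step 0 (-1) 2 1; step 4 (-2) 1 0; step 5 (-2) 1 2]);
  CaseCert (-2) 3 1 2 (-2) (-3)
    (ConnCert 0 1 2
      [step 1 0 0 0; step 0 1 2 1; step (-2) 1 0 1; step (-2) 0 0 2; step 0 (-1) 1 2; step 2 (-1) 1 0; step 2 0 2 0]
      [step 0 1 2 1; step (-2) 1 0 1; step (-2) 0 0 2; step 0 (-1) 1 2; step 2 (-1) 1 0; step 2 0 2 0])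
    (ConnCert 0 1 2
      [step 1 0 0 0; step 0 1 0 2; step (-3) 1 2 1; step (-2) 0 2 0; step 0 (-1) 2 0; step 3 (-1) 1 2; step 2 0 0 2]
      [step 0 (-1) 2 0; step 3 (-1) 1 2; step 2 0 0 2; step 0 1 0 2; step (-3) 1 2 1; step (-2) 0 2 0]);
  CaseCert (-1) 3 1 1 (-5) (-3)
    (ConnCert 0 1 2
      [step 1 0 0 0; step 0 1 2 1; step (-2) 0 0 2; step 0 (-1) 1 2; step 2 0 2 0]
      [step 0 1 2 1; step (-2) 0 0 2; step 0 (-1) 1 2; step 2 0 2 0])
    (ConnCert 0 1 2
      [step 1 0 0 0; step 0 1 0 1; step (-2) 1 2 1; step (-2) 0 2 0; step 0 (-1) 1 0; step 2 (-1) 1 2; step 2 0 0 2]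
      [step 0 (-1) 1 0; step 2 (-1) 1 2; step 2 0 0 2; step 0 1 0 1; step (-2) 1 2 1; step (-2) 0 2 0]);
  CaseCert 0 3 1 0 (-1) 0
    (ConnCert 0 1 2
      [step 1 0 0 0; step 0 1 0 1; step (-2) 0 0 2; step 0 (-1) 1 0; step 2 0 2 0]
      [step 0 1 0 1; step (-2) 0 0 2; step 0 (-1) 1 0; step 2 0 2 0])
    (ConnCert 0 1 2
      [step 1 0 0 0; step 0 1 0 1; step (-2) 0 2 0; step 0 (-1) 1 0; step 2 0 0 2]
      [step 0 (-1) 1 0; step 2 0 0 2; step 0 1 0 1; step (-2) 0 2 0]);
  CaseCert 1 3 5 (-3) (-1) 1
    (ConnCert 0 1 2
      [step 1 0 0 0; step 0 1 0 1; step (-2) (-1) 1 2; step 2 0 2 0]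
      [step 0 1 0 1; step (-2) (-1) 1 2; step 2 0 2 0])
    (ConnCert 0 1 2
      [step 1 0 0 0; step 0 1 2 1; step (-2) 0 2 0; step 0 (-1) 1 2; step 2 0 0 2]
      [step 0 (-1) 1 2; step 2 0 0 2; step 0 1 2 1; step (-2) 0 2 0]);
  CaseCert 2 3 4 (-6) (-3) 6
    (ConnCert 0 1 2
      [step 1 0 0 0; step 0 1 0 2; step (-3) (-1) 1 2; step 2 0 2 0]
      [step 0 1 0 2; step (-3) (-1) 1 2; step 2 0 2 0])
    (ConnCert 0 1 2
      [step 1 0 0 0; step 0 1 2 1; step (-2) (-1) 1 0; step 2 0 0 2]
      [step 0 (-1) 1 2; step 2 1 0 1; step (-2) 0 2 0]);
  CaseCert 3 3 3 (-6) (-3) 6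
    (ConnCert 0 1 2
      [step 1 0 0 0; step 0 1 1 2; step (-4) (-2) 1 0; step 5 2 2 1; step (-5) (-2) 1 2]
      [step 0 1 1 2; step (-4) (-2) 1 0; step 5 2 2 1; step (-5) (-2) 1 2])
    (ConnCert 1 0 2
      [step (-1) 0 1 0; step (-1) (-1) 0 2; step 3 1 0 2; step (-3) (-1) 2 0]
      [step (-1) (-1) 0 2; step 3 1 0 2; step (-3) (-1) 2 0]);
  CaseCert (-1) (-3) 3 6 (-1) (-2)
    (ConnCert 1 0 2
      [step (-1) 0 0 1; step 1 (-1) 0 2; step (-3) 1 0 1; step 4 (-2) 0 1; step (-5) 2 1 2; step 5 (-2) 2 1]
      [step (-1) 1 2 0; step 3 (-1) 1 0; step (-4) 2 1 0; step 5 (-2) 2 1; step (-5) 2 1 2])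
    (ConnCert 0 1 2
      [step 1 0 0 0; step 0 1 1 2; step 2 0 0 2]
      [step 0 (-1) 2 1; step (-2) 0 2 0]);
  CaseCert 0 (-3) 1 0 (-1) 0
    (ConnCert 0 1 2
      [step 1 0 0 0; step 0 1 1 0; step 2 0 2 0]
      [step 0 1 1 0; step 2 0 2 0])
    (ConnCert 0 1 2
      [step 1 0 0 0; step 0 1 1 0; step 2 0 0 2]
      [step 0 (-1) 0 1; step (-2) 0 2 0]);
  CaseCert 1 (-3) 3 (-6) (-1) 2
    (ConnCert 0 1 2
      [step 1 0 0 0; step 0 1 1 2; step 2 0 2 0]
      [step 0 1 1 2; step 2 0 2 0])
    (ConnCert 1 0 2
      [step (-1) 0 1 0; step (-1) (-1) 0 2; step (-3) (-1) 1 0; step (-4) (-2) 0 1; step (-5) (-2) 2 1]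
      [step (-1) (-1) 0 2; step (-3) (-1) 1 0; step (-4) (-2) 0 1; step (-5) (-2) 2 1])].

Lemma certificates_ok : forallb case_cert_ok certificates = true.
Proof. vm_compute. reflexivity. Qed.

Lemma certificates_cover p q : ((q = 3 /\ -3 <= p <= 3) \/ (q = -3 /\ -1 <= p <= 1))%Z ->
  exists c, In c certificates /\ cp c = p /\ cq c = q.
Proof.
  intros H.
  assert (Hpq : In (p, q) (map (fun c => (cp c, cq c)) certificates)).
  { destruct H as [[-> H] | [-> H]];
      assert (p = -3 \/ p = -2 \/ p = -1 \/ p = 0 \/ p = 1 \/ p = 2 \/ p = 3)%Z
        as [-> | [-> | [-> | [-> | [-> | [-> | ->]]]]]] by lia;
      simpl; tauto || lia. }
  apply in_map_iff in Hpq as [c [E Hc]]. injection E; intros. exists c; auto.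
Qed.

Lemma companion_iff p q k : ((q = 3 /\ -3 <= p <= 3) \/ (q = -3 /\ -1 <= p <= 1))%Z -> k <> 0%Z ->
  (connected2 (attractor (Mpq p q) (DR k)) <-> (k = 1 \/ k = -1)%Z).
Proof.
  intros Hpq Hk. destruct (certificates_cover p q Hpq) as [c [Hc [<- <-]]].
  apply case_cert_sound; auto.
  pose proof certificates_ok as Hall. rewrite forallb_forall in Hall. auto.
Qed.
Lemma lin_indep_det (v w : pt) : lin_indep2 v w -> fst v * snd w - snd v * fst w <> 0.
Proof.
  intros hv Hdet.
  destruct (hv (snd w) (- snd v)) as [Hw2 Hv2]; [apply pt_eq; simpl; lra|].
  destruct (hv (fst w) (- fst v)) as [Hw1 Hv1]; [apply pt_eq; simpl; nra|].
  destruct (hv 1 0) as [H10 _]; [apply pt_eq; simpl; lra | lra].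
Qed.

Definition PmOf (v w : pt) : rmat := RM (fst v) (fst w) (snd v) (snd w).
Definition DlOf (v w : pt) : R := fst v * snd w - snd v * fst w.
Definition QmOf (v w : pt) : rmat :=
  RM (snd w / DlOf v w) (- fst w / DlOf v w) (- snd v / DlOf v w) (fst v / DlOf v w).

Lemma PQ_inv v w z : DlOf v w <> 0 -> mv (PmOf v w) (mv (QmOf v w) z) = z.
Proof. intros H. unfold PmOf, QmOf, mv; simpl. unfold DlOf in *. apply pt_eq; simpl; field; auto. Qed.
Lemma QP_inv v w z : DlOf v w <> 0 -> mv (QmOf v w) (mv (PmOf v w) z) = z.
Proof. intros H. unfold PmOf, QmOf, mv; simpl. unfold DlOf in *. apply pt_eq; simpl; field; auto. Qed.

Lemma minv_companion A v y : detZ A <> 0%Z ->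
  minv_apply A (mv (PmOf v (mapply A v)) y) =
  mv (PmOf v (mapply A v)) (mv (Mpq (- (m11 A + m22 A)) (detZ A)) y).
Proof.
  intros hdet.
  assert (Hq : IZR (detZ A) <> 0) by (apply not_0_IZR; auto).
  unfold minv_apply, Mpq, PmOf, mapply, mv in *; simpl. unfold detZ in *.
  rewrite minus_IZR, !mult_IZR in *. rewrite opp_IZR, plus_IZR.
  apply pt_eq; simpl; field; auto.
Qed.

Lemma partial_sum_ext A d d' n : (forall i, d i = d' i) -> partial_sum A d n = partial_sum A d' n.
Proof. intros H. induction n; simpl; [reflexivity | rewrite IHn, H; reflexivity]. Qed.

Section Transport.
Variable A : mat2Z.
Variable v : pt.
Variable k : Z.
Hypothesis hdet : detZ A <> 0%Z.
Hypothesis hv : lin_indep2 v (mapply A v).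
Definition Pm := PmOf v (mapply A v).
Definition Qm := QmOf v (mapply A v).
Definition Mt := Mpq (- (m11 A + m22 A)) (detZ A).
Definition DA : list pt := [pzero; v; pscale (IZR k) (mapply A v)].

Lemma PQ z : mv Pm (mv Qm z) = z.
Proof. apply PQ_inv, lin_indep_det, hv. Qed.
Lemma QP z : mv Qm (mv Pm z) = z.
Proof. apply QP_inv, lin_indep_det, hv. Qed.

Lemma partial_sum_companion d n : partial_sum A (fun i => mv Pm (d i)) n = mv Pm (psum Mt d n).
Proof.
  assert (Hpow : forall m y, minv_pow A m (mv Pm y) = mv Pm (mpow Mt m y)).
  { induction m; intro y; simpl; auto. rewrite IHm. apply minv_companion; auto. }
  induction n.
  - simpl. unfold Pm, PmOf, mv, pzero; apply pt_eq; simpl; ring.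
  - change (padd (partial_sum A (fun i => mv Pm (d i)) n) (minv_pow A (S n) (mv Pm (d n))) =
            mv Pm (psum Mt d (S n))).
    rewrite IHn, Hpow, psum_S, mv_padd. reflexivity.
Qed.

Lemma DA_map : DA = map (mv Pm) (DR k).
Proof.
  unfold DA, DR, Dz, zr, Pm, PmOf, mv, pscale, pzero; simpl.
  repeat (f_equal; [apply pt_eq; simpl; ring |]). f_equal. apply pt_eq; simpl; ring.
Qed.

Lemma transport x : self_affine_set A DA x <-> exists y, attractor Mt (DR k) y /\ x = mv Pm y.
Proof.
  split.
  - intros [d [Hd Hx]].
    set (d' := fun i => mv Qm (d i)).
    assert (Hd' : valid (DR k) d').
    { intro i. specialize (Hd i). rewrite DA_map in Hd. apply in_map_iff in Hd as [e [Ee He]].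
      unfold d'. rewrite <- Ee, QP. auto. }
    assert (Epart : forall n, psum Mt d' n = mv Qm (partial_sum A d n)).
    { intro n. rewrite <- (QP (psum Mt d' n)), <- partial_sum_companion. f_equal.
      apply partial_sum_ext. intro i. apply PQ. }
    exists (mv Qm x). split; [|rewrite PQ; auto].
    exists d'. split; auto. apply (pcv_ext _ _ _ (fun n => eq_sym (Epart n))). apply pcv_mv. exact Hx.
  - intros [y [[d' [Hd' Hy]] ->]].
    exists (fun i => mv Pm (d' i)). split.
    + intro i. rewrite DA_map. apply in_map; auto.
    + apply (pcv_ext (fun n => mv Pm (psum Mt d' n))); [intro n; rewrite partial_sum_companion; auto|].
      apply pcv_mv. exact Hy.
Qed.
End Transport.

(* Connectedness is preserved by linear maps (which are Lipschitz). *)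
Lemma conn_image (G : rmat) (S S' : pt -> Prop) :
  (forall x, S' x <-> exists y, S y /\ x = mv G y) -> connected2 S -> connected2 S'.
Proof.
  intros HS Hc [U [V [HU [HV [Hcov [[pu [Spu Upu]] [[pv [Spv Vpv]] Hdis]]]]]]].
  apply Hc. set (KG := 2 * row_norm G).
  assert (KG0 : 0 <= KG) by (pose proof (row_norm_nonneg G); unfold KG; lra).
  assert (Hlip : forall y z, dist2 (mv G y) (mv G z) <= KG * dist2 y z).
  { intros y z. eapply Rle_trans; [apply dist2_le|]. rewrite <- mv_psub.
    pose proof (mv_bound G (psub y z)). pose proof (nrm_le_dist2 y z).
    pose proof (nrm_nonneg (psub y z)). pose proof (row_norm_nonneg G). unfold KG.
    assert (row_norm G * nrm (psub y z) <= row_norm G * dist2 y z) by (apply Rmult_le_compat_l; lra).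
    lra. }
  assert (Hop : forall W, open2 W -> open2 (fun y => W (mv G y))).
  { intros W HW y Wy. destruct (HW _ Wy) as [e [He Hb]].
    exists (e / (KG + 1)). split; [apply Rdiv_lt_0_compat; lra|].
    intros z Hz. apply Hb. eapply Rle_lt_trans; [apply Hlip|].
    assert (0 <= dist2 y z) by (unfold dist2; apply sqrt_pos).
    apply Rle_lt_trans with ((KG + 1) * dist2 y z); [nra|].
    apply Rlt_le_trans with ((KG + 1) * (e / (KG + 1))); [apply Rmult_lt_compat_l; lra|].
    right; field; lra. }
  exists (fun y => U (mv G y)), (fun y => V (mv G y)). repeat split.
  - apply Hop; auto.
  - apply Hop; auto.
  - intros y Sy. apply Hcov. apply HS. eauto.
  - apply HS in Spu as [y [Sy ->]]. eauto.
  - apply HS in Spv as [y [Sy ->]]. eauto.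
  - intros y Sy Uy Vy. apply (Hdis (mv G y)); auto. apply HS; eauto.
Qed.

Lemma self_affine_companion A v k : detZ A <> 0%Z -> lin_indep2 v (mapply A v) ->
  (connected2 (self_affine_set A (DA A v k)) <-> connected2 (attractor (Mt A) (DR k))).
Proof.
  intros hd hv. split.
  - apply conn_image with (G := Qm A v). intros y. split.
    + intros Hy. exists (mv (Pm A v) y). split; [apply transport; auto; exists y; auto | rewrite QP; auto].
    + intros [x [Sx ->]]. apply transport in Sx as [y [Ty ->]]; auto. rewrite QP; auto.
  - apply conn_image with (G := Pm A v). intros x. apply transport; auto.
Qed.

(* A root in [-1, 1] of the characteristic polynomial is an eigenvalue of
   modulus at most 1, which an expanding matrix cannot have. *)
Lemma small_root_not_expanding A l :
  l * l - IZR (m11 A + m22 A) * l + IZR (detZ A) = 0 -> -1 <= l <= 1 -> ~ expanding A.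
Proof.
  intros Hroot Hl Hexp.
  assert (Hev : exists w1 w2, (w1 <> 0 \/ w2 <> 0) /\
      IZR (m11 A) * w1 + IZR (m12 A) * w2 = l * w1 /\ IZR (m21 A) * w1 + IZR (m22 A) * w2 = l * w2).
  { unfold detZ in Hroot. rewrite plus_IZR, minus_IZR, !mult_IZR in Hroot.
    destruct (Req_dec (IZR (m12 A)) 0) as [H12|H12].
    - rewrite H12 in *. destruct (Req_dec l (IZR (m22 A))) as [E|E].
      + exists 0, 1. split; [right; lra | split; lra].
      + exists (IZR (m11 A) - IZR (m22 A)), (IZR (m21 A)).
        assert (l = IZR (m11 A)) by (apply Rmult_eq_reg_l with (l - IZR (m22 A)); nra).
        split; [left; lra | split; nra].
    - exists (IZR (m12 A)), (l - IZR (m11 A)). split; [left; auto | split; nra]. }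
  destruct Hev as [w1 [w2 [Hw [E1 E2]]]].
  assert (He : is_eigenvalue A (l, 0)).
  { exists (w1, 0), (w2, 0). split.
    - destruct Hw as [H|H]; [left | right]; intro HH; injection HH; intros; lra.
    - unfold padd, pscale, cmul; simpl. split; apply pt_eq; simpl; lra. }
  specialize (Hexp _ He). simpl in Hexp.
  replace (l * l + 0 * 0) with (Rsqr l) in Hexp by (unfold Rsqr; ring).
  rewrite sqrt_Rsqr_abs in Hexp. unfold Rabs in Hexp. destruct (Rcase_abs l); lra.
Qed.

Lemma quad_root (t d : Z) : (d = 3 /\ (4 <= t \/ t <= -4) \/ d = -3 /\ (2 <= t \/ t <= -2))%Z ->
  exists l, l * l - IZR t * l + IZR d = 0 /\ -1 <= l <= 1.
Proof.
  intros H. set (T := IZR t).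
  assert (HD : 0 <= T * T - 4 * IZR d).
  { destruct H as [[-> [Ht|Ht]]|[-> [Ht|Ht]]]; apply IZR_le in Ht; unfold T; nra. }
  set (s := sqrt (T * T - 4 * IZR d)).
  assert (Hs : s * s = T * T - 4 * IZR d) by (unfold s; apply sqrt_sqrt; auto).
  assert (Hs0 : 0 <= s) by (unfold s; apply sqrt_pos).
  destruct H as [[-> [Ht|Ht]]|[-> [Ht|Ht]]]; apply IZR_le in Ht; fold T in Ht.
  - exists ((T - s) / 2). split; [nra|].
    assert (s <= T) by nra. assert (T - 2 <= s) by nra. lra.
  - exists ((T + s) / 2). split; [nra|].
    assert (s <= - T) by nra. assert (- T - 2 <= s) by nra. lra.
  - exists ((T - s) / 2). split; [nra|].
    assert (T <= s) by nra. assert (s <= T + 2) by nra. lra.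
  - exists ((T + s) / 2). split; [nra|].
    assert (- T <= s) by nra. assert (s <= 2 - T) by nra. lra.
Qed.

Lemma companion_classification A : expanding A -> Z.abs (detZ A) = 3%Z ->
  ((detZ A = 3 /\ -3 <= - (m11 A + m22 A) <= 3) \/ (detZ A = -3 /\ -1 <= - (m11 A + m22 A) <= 1))%Z.
Proof.
  intros Hexp Hdet.
  destruct (classic ((detZ A = 3 /\ -3 <= - (m11 A + m22 A) <= 3) \/
                     (detZ A = -3 /\ -1 <= - (m11 A + m22 A) <= 1))%Z) as [H|H]; auto.
  exfalso. destruct (quad_root (m11 A + m22 A) (detZ A)) as [l [Hl1 Hl2]]; [lia|].
  exact (small_root_not_expanding A l Hl1 Hl2 Hexp).
Qed.

Theorem theorem1p1 (A : mat2Z) (k : Z) (v : pt)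
  (hexp : expanding A)
  (hdet : Z.abs (detZ A) = 3%Z)
  (hk : k <> 0%Z)
  (hv : lin_indep2 v (mapply A v)) :
  connected2 (self_affine_set A (pzero :: v :: pscale (IZR k) (mapply A v) :: nil))
  <-> (k = 1%Z \/ k = (-1)%Z).
Proof.
  assert (hd : detZ A <> 0%Z) by lia.
  change (pzero :: v :: pscale (IZR k) (mapply A v) :: nil) with (DA A v k).
  rewrite (self_affine_companion A v k hd hv).
  apply companion_iff; auto.
  apply companion_classification; auto.
Qed.
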